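(* Let $r>0$ and let $L$ range over those integers for which $N=rL$ is an integer. Let $\nu_L$ be the (unique) stationary distribution of the RBB process with $L$ bins and $N=rL$ balls, and let $\eta^L\sim\nu_L$. Assume that $(\nu_L)$ is chaotic, i.e. there is a probability measure $\mu$ on $\mathbb{Z}_+$ such that for every $n\in\mathbb{N}$ the law of $(\eta^L_1,\dots,\eta^L_n)$ converges weakly to $\mu^{\otimes n}$ as $L\to\infty$. Then $\mu=\pi_{\rho_r}$, where $\rho_r=1+r-\sqrt{1+r^2}$.
   Context: RBB process with $L$ bins: Markov chain on $\mathbb{Z}_+^L$; with $w(\eta):=(\mathbf{1}(\eta_1>0),\dots,\mathbf{1}(\eta_L>0))$ and $K(\eta):=\sum_j\mathbf{1}(\eta_j>0)$, from state $\eta$ the next state is $\eta-w(\eta)+B(\eta)$ where $B(\eta)$ is multinomial with $K(\eta)$ trials and cell probabilities $(1/L,\dots,1/L)$. It conserves the total number of balls and, restricted to configurations with $N$ balls, is an ergodic finite Markov chain. The M/D/1 queue with arrival rate $\rho\ge0$ is the Markov chain on $\mathbb{Z}_+$ given by $\zeta(t+1):=\zeta(t)-\mathbf{1}(\zeta(t)>0)+M_{t+1}$ with $(M_t)_{t\ge1}$ i.i.d. Poisson of mean $\rho$; for $\rho\in[0,1)$, $\pi_\rho$ denotes its invariant probability measure. *)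

From Stdlib Require Import Reals Lra Lia Arith List Bool.
Import ListNotations.
Open Scope R_scope.

Definition ind_pos (x : nat) : nat := if Nat.eqb x 0 then 0%nat else 1%nat.

Definition nsum (l : list nat) : nat := fold_right Nat.add 0%nat l.
Definition Rsum_list (l : list R) : R := fold_right Rplus 0 l.
Definition Rprod_list (l : list R) : R := fold_right Rmult 1 l.

Definition Kocc (eta : list nat) : nat := nsum (map ind_pos eta).

Fixpoint configs (L N : nat) : list (list nat) :=
  match L with
  | O => if Nat.eqb N 0 then [[]] else []
  | S L' => flat_map (fun k => map (cons k) (configs L' (N - k))) (seq 0 (S N))
  end.

(** One-step transition probability of the RBB process with L bins:
    eta' = eta - w(eta) + B, with B ~ Multinomial(K(eta); 1/L,...,1/L).
    B_j = eta'_j + w_j - eta_j must be >= 0; its multinomial probability is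
    K!/(prod_j B_j!) * (1/L)^K. *)
Definition rbb_trans (L : nat) (eta eta' : list nat) : R :=
  let pairs := combine eta eta' in
  let K := Kocc eta in
  if (forallb (fun p => Nat.leb (fst p) (snd p + ind_pos (fst p))) pairs
     && Nat.eqb (nsum eta) (nsum eta'))%bool
  then
    let bs := map (fun p => (snd p + ind_pos (fst p) - fst p)%nat) pairs in
    INR (fact K) / Rprod_list (map (fun b => INR (fact b)) bs) * (/ INR L) ^ K
  else 0.

Definition rbb_stationary (L N : nat) (nu : list nat -> R) : Prop :=
  (forall eta, In eta (configs L N) -> 0 <= nu eta) /\
  Rsum_list (map nu (configs L N)) = 1 /\
  (forall eta', In eta' (configs L N) ->
     nu eta' = Rsum_list (map (fun eta => nu eta * rbb_trans L eta eta') (configs L N))).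

Definition marginal (L N : nat) (nu : list nat -> R) (k : list nat) : R :=
  Rsum_list (map nu (filter (fun eta => if list_eq_dec Nat.eq_dec (firstn (length k) eta) k
                                        then true else false) (configs L N))).

Definition prod_measure (mu : nat -> R) (k : list nat) : R := Rprod_list (map mu k).

Definition prob_measure_nat (mu : nat -> R) : Prop :=
  (forall j, 0 <= mu j) /\ infinite_sum mu 1.

Definition poisson (rho : R) (k : nat) : R := exp (- rho) * rho ^ k / INR (fact k).

(** pi is an invariant probability measure of the M/D/1 queue with arrival rate rho:
    zeta(t+1) = zeta(t) - 1(zeta(t)>0) + M, M ~ Poisson(rho). From state i one can reach
    j only if i <= j+1, with probability poisson rho (j + 1(i>0) - i). *)
Definition md1_invariant (rho : R) (pi : nat -> R) : Prop :=
  prob_measure_nat pi /\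
  (forall j : nat,
     pi j = sum_f_R0 (fun i => pi i * poisson rho (j + ind_pos i - i)%nat) (S j)).

Definition rho_of (r : R) : R := 1 + r - sqrt (1 + r ^ 2).

From Stdlib Require Import Reals Lra Lia List Bool Permutation ZArith.
Import ListNotations.
Open Scope R_scope.

(** The stationary law [nu_L] is unique, because from every configuration the chain reaches the
    configuration with all balls in the first bin with positive probability; hence it is
    exchangeable.  After one step the first bin holds [eta_1 - 1(eta_1 > 0)] balls plus a
    Binomial(K, 1/L) number of arrivals, where [K] is the number of occupied bins.  Stationarity of
    the second moment of the first bin, combined with exchangeability, is an exact identity between
    [N/L], [P(eta_1 > 0)] and [P(eta_1 > 0, eta_2 > 0)]; in the chaotic limit it becomes
    [rho^2 - 2 (1 + r) rho + 2 r = 0] for [rho = 1 - mu(0)], whose root in [[0, 1]] is [rho_r].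
    The same two marginals show that [K/L] concentrates at [rho], so the arrivals become
    Poisson(rho), and the one-step balance of the law of the first bin passes to the limit as the
    invariance equation of the M/D/1 queue. *)

Definition sumR {A} (f : A -> R) (l : list A) : R := Rsum_list (map f l).

Lemma sumR_nil {A} (f : A -> R) : sumR f [] = 0.
Proof. reflexivity. Qed.

Lemma sumR_cons {A} (f : A -> R) a l : sumR f (a :: l) = f a + sumR f l.
Proof. reflexivity. Qed.

Lemma sumR_app {A} (f : A -> R) l1 l2 : sumR f (l1 ++ l2) = sumR f l1 + sumR f l2.
Proof. induction l1; simpl app; [rewrite sumR_nil; lra|]. rewrite !sumR_cons, IHl1; lra. Qed.

Lemma sumR_map {A B} (f : B -> R) (g : A -> B) l : sumR f (map g l) = sumR (fun x => f (g x)) l.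
Proof. unfold sumR; now rewrite map_map. Qed.

Lemma sumR_flat_map {A B} (f : B -> R) (g : A -> list B) l :
  sumR f (flat_map g l) = sumR (fun x => sumR f (g x)) l.
Proof. induction l; simpl flat_map; [reflexivity|]. now rewrite sumR_app, sumR_cons, IHl. Qed.

Lemma sumR_ext {A} (f g : A -> R) l : (forall x, In x l -> f x = g x) -> sumR f l = sumR g l.
Proof.
  induction l; intros H; [reflexivity|].
  rewrite !sumR_cons, IHl, H; simpl; auto. intros; apply H; simpl; auto.
Qed.

Lemma sumR_plus {A} (f g : A -> R) l : sumR (fun x => f x + g x) l = sumR f l + sumR g l.
Proof. induction l; [cbn; lra|]. rewrite !sumR_cons, IHl; lra. Qed.

Lemma sumR_minus {A} (f g : A -> R) l : sumR (fun x => f x - g x) l = sumR f l - sumR g l.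
Proof. induction l; [cbn; lra|]. rewrite !sumR_cons, IHl; lra. Qed.

Lemma sumR_scal_l {A} c (f : A -> R) l : sumR (fun x => c * f x) l = c * sumR f l.
Proof. induction l; [cbn; lra|]. rewrite !sumR_cons, IHl; lra. Qed.

Lemma sumR_scal_r {A} c (f : A -> R) l : sumR (fun x => f x * c) l = sumR f l * c.
Proof. induction l; [cbn; lra|]. rewrite !sumR_cons, IHl; lra. Qed.

Lemma sumR_const {A} c (l : list A) : sumR (fun _ => c) l = INR (length l) * c.
Proof. induction l; [cbn; lra|]. rewrite sumR_cons, IHl, length_cons, S_INR; lra. Qed.

Lemma sumR_zero {A} (l : list A) : sumR (fun _ => 0) l = 0.
Proof. rewrite sumR_const; lra. Qed.

Lemma sumR_eq0 {A} (f : A -> R) l : (forall x, In x l -> f x = 0) -> sumR f l = 0.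
Proof. intros H. rewrite <- (sumR_zero l). now apply sumR_ext. Qed.

Lemma sumR_le {A} (f g : A -> R) l : (forall x, In x l -> f x <= g x) -> sumR f l <= sumR g l.
Proof.
  induction l; intros H; [cbn; lra|]. rewrite !sumR_cons.
  assert (f a <= g a) by (apply H; simpl; auto).
  assert (sumR f l <= sumR g l) by (apply IHl; intros; apply H; simpl; auto). lra.
Qed.

Lemma sumR_nonneg {A} (f : A -> R) l : (forall x, In x l -> 0 <= f x) -> 0 <= sumR f l.
Proof. intros H. rewrite <- (sumR_zero l). now apply sumR_le. Qed.

Lemma sumR_abs {A} (f : A -> R) l : Rabs (sumR f l) <= sumR (fun x => Rabs (f x)) l.
Proof.
  induction l; [cbn; rewrite Rabs_R0; lra|]. rewrite !sumR_cons.
  eapply Rle_trans; [apply Rabs_triang|]. lra.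
Qed.

Lemma sumR_swap {A B} (f : A -> B -> R) l1 l2 :
  sumR (fun x => sumR (fun y => f x y) l2) l1 = sumR (fun y => sumR (fun x => f x y) l1) l2.
Proof.
  induction l1.
  - symmetry. apply sumR_zero.
  - rewrite sumR_cons, IHl1, <- sumR_plus. apply sumR_ext. intros; now rewrite sumR_cons.
Qed.

Lemma sumR_perm {A} (f : A -> R) l1 l2 : Permutation l1 l2 -> sumR f l1 = sumR f l2.
Proof. induction 1; unfold sumR in *; simpl; lra. Qed.

Lemma sumR_elem_le {A} (f : A -> R) l x :
  (forall y, In y l -> 0 <= f y) -> In x l -> f x <= sumR f l.
Proof.
  induction l; intros H Hx; [destruct Hx|]. rewrite sumR_cons. destruct Hx as [<-|Hx].
  - assert (0 <= sumR f l) by (apply sumR_nonneg; intros; apply H; simpl; auto). lra.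
  - assert (f x <= sumR f l) by (apply IHl; auto; intros; apply H; simpl; auto).
    assert (0 <= f a) by (apply H; simpl; auto). lra.
Qed.

Lemma sumR_eq0_nonneg {A} (f : A -> R) l :
  (forall y, In y l -> 0 <= f y) -> sumR f l = 0 -> forall x, In x l -> f x = 0.
Proof.
  intros H H0 x Hx. pose proof (sumR_elem_le f l x H Hx). pose proof (H x Hx). lra.
Qed.

Lemma sumR_filter {A} (f : A -> R) (p : A -> bool) l :
  sumR f (filter p l) = sumR (fun x => if p x then f x else 0) l.
Proof.
  induction l; [reflexivity|]. cbn [filter]. rewrite sumR_cons.
  destruct (p a); rewrite ?sumR_cons, IHl; lra.
Qed.

Lemma sumR_abs_eq_same_sign {A} (f : A -> R) l :
  Rabs (sumR f l) = sumR (fun x => Rabs (f x)) l ->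
  (forall x, In x l -> 0 <= f x) \/ (forall x, In x l -> f x <= 0).
Proof.
  intros H. destruct (Rle_dec 0 (sumR f l)).
  - left. rewrite Rabs_right in H by lra. intros x Hx.
    assert (Rabs (f x) - f x = 0).
    { apply (sumR_eq0_nonneg (fun x => Rabs (f x) - f x) l); auto.
      - intros y _. pose proof (Rle_abs (f y)); lra.
      - rewrite sumR_minus; lra. }
    pose proof (Rabs_pos (f x)); lra.
  - right. rewrite Rabs_left in H by lra. intros x Hx.
    assert (Rabs (f x) + f x = 0).
    { apply (sumR_eq0_nonneg (fun x => Rabs (f x) + f x) l); auto.
      - intros y _. pose proof (Rle_abs (- f y)); rewrite Rabs_Ropp in *; lra.
      - rewrite sumR_plus; lra. }
    pose proof (Rabs_pos (f x)); lra.
Qed.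

Lemma sumR_seq_last f a n : sumR f (seq a (S n)) = sumR f (seq a n) + f (a + n)%nat.
Proof. rewrite seq_S, sumR_app, sumR_cons, sumR_nil. lra. Qed.

Lemma sumR_seq_first f n : sumR f (seq 0 (S n)) = f 0%nat + sumR (fun i => f (S i)) (seq 0 n).
Proof. cbn [seq]. now rewrite sumR_cons, <- seq_shift, sumR_map. Qed.

Lemma sumR_seq_sum_f_R0 f n : sumR f (seq 0 (S n)) = sum_f_R0 f n.
Proof. induction n; [cbn; lra|]. now rewrite sumR_seq_last, IHn. Qed.

Lemma sumR_seq_offset f a n : sumR f (seq a n) = sumR (fun i => f (a + i)%nat) (seq 0 n).
Proof. revert a; induction n; intros a; [reflexivity|]. now rewrite !sumR_seq_last, IHn. Qed.

Lemma sumR_seq_window f n a T : (a + T < n)%nat ->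
  (forall k, (k < n)%nat -> (k < a \/ a + T < k)%nat -> f k = 0) ->
  sumR f (seq 0 n) = sumR (fun i => f (a + i)%nat) (seq 0 (S T)).
Proof.
  intros Hn H. replace n with (a + (S T + (n - a - S T)))%nat by lia.
  rewrite !seq_app, !sumR_app, (sumR_eq0 f (seq 0 a)), (sumR_eq0 f (seq (0 + a + S T) _))
    by (intros k Hk; apply in_seq in Hk; apply H; lia).
  rewrite sumR_seq_offset. simpl. lra.
Qed.

Lemma sumR_seq_single f n a : (a < n)%nat ->
  (forall k, (k < n)%nat -> k <> a -> f k = 0) -> sumR f (seq 0 n) = f a.
Proof.
  intros Ha H. rewrite (sumR_seq_window f n a 0) by (lia || (intros; apply H; lia)).
  cbn. rewrite Nat.add_0_r. lra.
Qed.

Lemma nsum_cons a l : nsum (a :: l) = (a + nsum l)%nat.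
Proof. reflexivity. Qed.

Lemma nsum_perm l l' : Permutation l l' -> nsum l = nsum l'.
Proof. induction 1; simpl in *; lia. Qed.

Lemma INR_nsum l : INR (nsum l) = sumR INR l.
Proof. induction l; [reflexivity|]. now rewrite nsum_cons, plus_INR, sumR_cons, IHl. Qed.

Lemma nsum_eq0 l : nsum l = 0%nat -> l = repeat 0%nat (length l).
Proof. induction l; [reflexivity|]. rewrite nsum_cons. intros H. simpl. f_equal; [lia|]. apply IHl; lia. Qed.

Lemma nsum_repeat0 n : nsum (repeat 0%nat n) = 0%nat.
Proof. induction n; auto. Qed.

Lemma ind_pos_le e : (ind_pos e <= e)%nat.
Proof. destruct e; cbn; lia. Qed.

Lemma ind_pos_le1 e : (ind_pos e <= 1)%nat.
Proof. destruct e; cbn; lia. Qed.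

Lemma ind_pos_cases a : (ind_pos a = 0 /\ a = 0 \/ ind_pos a = 1 /\ 0 < a)%nat.
Proof. destruct a; cbn; lia. Qed.

Lemma Kocc_cons a t : Kocc (a :: t) = (ind_pos a + Kocc t)%nat.
Proof. reflexivity. Qed.

Lemma Kocc_le_nsum t : (Kocc t <= nsum t)%nat.
Proof. induction t; [cbn; lia|]. rewrite Kocc_cons, nsum_cons. pose proof (ind_pos_le a). lia. Qed.

Lemma Kocc_pos t : (0 < nsum t)%nat -> (0 < Kocc t)%nat.
Proof. induction t; [cbn; lia|]. rewrite nsum_cons, Kocc_cons. destruct a; cbn in *; lia. Qed.

Lemma In_configs L : forall N eta, In eta (configs L N) <-> length eta = L /\ nsum eta = N.
Proof.
  induction L; intros N eta; cbn [configs].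
  - destruct (Nat.eqb_spec N 0); simpl; split.
    + intros [<-|[]]; subst; auto.
    + intros [H1 H2]; destruct eta; [subst; auto|discriminate].
    + intros [].
    + intros [H1 H2]; destruct eta; [simpl in H2; lia|discriminate].
  - rewrite in_flat_map. split.
    + intros [k [Hk Hin]]. apply in_map_iff in Hin. destruct Hin as [e [<- He]].
      apply IHL in He. apply in_seq in Hk. destruct He. simpl. lia.
    + intros [H1 H2]. destruct eta as [|k e]; [discriminate|]. exists k. split.
      * apply in_seq. simpl in H2. lia.
      * apply in_map. apply IHL. simpl in *. lia.
Qed.

Lemma NoDup_configs L : forall N, NoDup (configs L N).
Proof.
  induction L; intros N; cbn [configs].
  - destruct (N =? 0)%nat; repeat constructor; auto.
  - generalize (seq_NoDup (S N) 0). generalize (seq 0 (S N)).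
    induction l as [|a l IH]; intros Hl; simpl; [constructor|].
    inversion Hl; subst. apply NoDup_app.
    + apply NoDup_map_NoDup_ForallPairs; auto. intros x y _ _ H; now inversion H.
    + now apply IH.
    + intros x Hx Hx'. apply in_map_iff in Hx. destruct Hx as [e [<- _]].
      apply in_flat_map in Hx'. destruct Hx' as [k [Hk Hk']]. apply in_map_iff in Hk'.
      destruct Hk' as [e' [He' _]]. inversion He'; subst. contradiction.
Qed.

Lemma sumR_configs_reindex L N (f : list nat -> list nat) (g : list nat -> R) :
  (forall x, In x (configs L N) -> In (f x) (configs L N)) ->
  (forall x y, In x (configs L N) -> In y (configs L N) -> f x = f y -> x = y) ->
  sumR (fun x => g (f x)) (configs L N) = sumR g (configs L N).
Proof.
  intros Hf Hinj. rewrite <- sumR_map. apply sumR_perm, Permutation_map_same_l.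
  - apply NoDup_map_NoDup_ForallPairs; [|apply NoDup_configs]. intros x y Hx Hy. now apply Hinj.
  - intros y Hy. apply in_map_iff in Hy. destruct Hy as [x [<- Hx]]. auto.
Qed.

Definition transpose (i j k : nat) : nat :=
  if Nat.eqb k i then j else if Nat.eqb k j then i else k.

Definition swap {A} (d : A) (i j : nat) (l : list A) : list A :=
  map (fun k => nth (transpose i j k) l d) (seq 0 (length l)).

Lemma transpose_lt i j k n :
  (i < n)%nat -> (j < n)%nat -> (k < n)%nat -> (transpose i j k < n)%nat.
Proof. unfold transpose; intros; destruct (Nat.eqb_spec k i), (Nat.eqb_spec k j); lia. Qed.

Lemma transpose_involutive i j k : transpose i j (transpose i j k) = k.
Proof.
  unfold transpose.
  destruct (Nat.eqb_spec k i), (Nat.eqb_spec k j), (Nat.eqb_spec j i), (Nat.eqb_spec i j);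
    subst; rewrite ?Nat.eqb_refl; try lia;
    repeat match goal with |- context [Nat.eqb ?a ?b] => destruct (Nat.eqb_spec a b) end; lia.
Qed.

Lemma nth_map_lt {A B} (f : A -> B) l k d d0 :
  (k < length l)%nat -> nth k (map f l) d = f (nth k l d0).
Proof. intros H. rewrite (nth_indep _ d (f d0)) by (now rewrite length_map). apply map_nth. Qed.

Lemma swap_length {A} (d : A) i j l : length (swap d i j l) = length l.
Proof. unfold swap. now rewrite length_map, length_seq. Qed.

Lemma nth_swap {A} (d : A) i j l k :
  (k < length l)%nat -> nth k (swap d i j l) d = nth (transpose i j k) l d.
Proof.
  intros Hk. unfold swap.
  rewrite (nth_map_lt _ _ _ _ 0%nat) by (now rewrite length_seq). now rewrite seq_nth.
Qed.

Lemma swap_involutive {A} (d : A) i j l :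
  (i < length l)%nat -> (j < length l)%nat -> swap d i j (swap d i j l) = l.
Proof.
  intros Hi Hj. apply nth_ext with d d; rewrite ?swap_length; auto. intros k Hk.
  rewrite nth_swap by (rewrite swap_length; auto). rewrite nth_swap by (apply transpose_lt; auto).
  now rewrite transpose_involutive.
Qed.

Lemma combine_swap {A B} (a : A) (b : B) i j l l' :
  length l = length l' -> (i < length l)%nat -> (j < length l)%nat ->
  combine (swap a i j l) (swap b i j l') = swap (a, b) i j (combine l l').
Proof.
  intros Hl Hi Hj. apply nth_ext with (a, b) (a, b).
  - now rewrite !length_combine, !swap_length, length_combine.
  - intros k Hk. rewrite length_combine, !swap_length in Hk.
    rewrite combine_nth by (now rewrite !swap_length).
    rewrite !nth_swap by (rewrite ?length_combine; lia).
    now rewrite combine_nth.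
Qed.

Lemma swap_perm {A} (d : A) i j l :
  (i < length l)%nat -> (j < length l)%nat -> Permutation (swap d i j l) l.
Proof.
  intros Hi Hj.
  assert (E : l = map (fun k => nth k l d) (seq 0 (length l))).
  { apply nth_ext with d d; rewrite ?length_map, ?length_seq; auto. intros k Hk.
    rewrite (nth_map_lt _ _ _ _ 0%nat) by (now rewrite length_seq). now rewrite seq_nth. }
  rewrite E at 2. unfold swap. rewrite <- (map_map (transpose i j) (fun k => nth k l d)).
  apply Permutation_map, Permutation_map_same_l.
  - apply NoDup_map_NoDup_ForallPairs; [|apply seq_NoDup]. intros x y _ _ H.
    now rewrite <- (transpose_involutive i j x), H, transpose_involutive.
  - intros y Hy. apply in_map_iff in Hy. destruct Hy as [x [<- Hx]]. apply in_seq in Hx.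
    apply in_seq. split; [lia|]. apply transpose_lt; lia.
Qed.

Lemma Rprod_list_perm l l' : Permutation l l' -> Rprod_list l = Rprod_list l'.
Proof. induction 1; unfold Rprod_list in *; simpl; [reflexivity|rewrite IHPermutation; reflexivity|ring|congruence]. Qed.

Lemma forallb_perm {A} (f : A -> bool) l l' : Permutation l l' -> forallb f l = forallb f l'.
Proof. induction 1; simpl; [reflexivity|now rewrite IHPermutation| |congruence]. now destruct (f x), (f y). Qed.

Lemma Kocc_swap i j x :
  (i < length x)%nat -> (j < length x)%nat -> Kocc (swap 0%nat i j x) = Kocc x.
Proof. intros. apply nsum_perm, Permutation_map, swap_perm; auto. Qed.

Lemma swap_In_configs L N i j x :
  (i < L)%nat -> (j < L)%nat -> In x (configs L N) -> In (swap 0%nat i j x) (configs L N).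
Proof.
  intros Hi Hj Hx. apply In_configs in Hx as [H1 H2]. apply In_configs.
  rewrite swap_length. split; auto. rewrite <- H2. apply nsum_perm, swap_perm; lia.
Qed.

Lemma sumR_configs_swap L N i j (g : list nat -> R) : (i < L)%nat -> (j < L)%nat ->
  sumR (fun x => g (swap 0%nat i j x)) (configs L N) = sumR g (configs L N).
Proof.
  intros Hi Hj. apply sumR_configs_reindex.
  - intros; now apply swap_In_configs.
  - intros x y Hx Hy E. apply In_configs in Hx, Hy.
    rewrite <- (swap_involutive 0%nat i j x), <- (swap_involutive 0%nat i j y) by lia.
    now rewrite E.
Qed.

Lemma rbb_trans_swap L eta eta' i j :
  length eta = L -> length eta' = L -> (i < L)%nat -> (j < L)%nat ->
  rbb_trans L (swap 0%nat i j eta) (swap 0%nat i j eta') = rbb_trans L eta eta'.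
Proof.
  intros H1 H2 Hi Hj. unfold rbb_trans.
  rewrite combine_swap by lia.
  assert (P : Permutation (swap (0%nat, 0%nat) i j (combine eta eta')) (combine eta eta'))
    by (apply swap_perm; rewrite length_combine; lia).
  rewrite (forallb_perm _ _ _ P), Kocc_swap by lia.
  rewrite (nsum_perm (swap 0%nat i j eta) eta), (nsum_perm (swap 0%nat i j eta') eta')
    by (apply swap_perm; lia).
  now rewrite (Rprod_list_perm _ _ (Permutation_map _ (Permutation_map _ P))).
Qed.

(** * The law of the first bin after one step *)

Definition depart (e : nat) : nat := (e - ind_pos e)%nat.

Definition first_bin (x : list nat) : nat := nth 0 x 0%nat.

(** [arrival_weight e k] is [1 / b!], where [b] is the number of balls a bin holding [e] balls
    must receive to hold [k] after the step; the multinomial probability is [K!] times the product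
    of these weights times [L^-K]. *)
Definition arrival_weight (e k : nat) : R :=
  if Nat.leb e (k + ind_pos e) then / INR (fact (k + ind_pos e - e)) else 0.

Fixpoint arrival_weights (eta eta' : list nat) : R :=
  match eta, eta' with a :: t, b :: t' => arrival_weight a b * arrival_weights t t' | _, _ => 1 end.

Lemma arrival_weight_depart e k :
  arrival_weight e k = if Nat.leb (depart e) k then / INR (fact (k - depart e)) else 0.
Proof.
  unfold arrival_weight, depart. pose proof (ind_pos_le e).
  destruct (Nat.leb_spec e (k + ind_pos e)), (Nat.leb_spec (e - ind_pos e) k); try lia; auto.
  do 3 f_equal. lia.
Qed.

Lemma arrival_weight_pos e k : (depart e <= k)%nat -> 0 < arrival_weight e k.
Proof.
  intros H. rewrite arrival_weight_depart. destruct (Nat.leb_spec (depart e) k); [|lia].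
  apply Rinv_0_lt_compat, INR_fact_lt_0.
Qed.

Lemma arrival_weights_nonneg eta eta' : 0 <= arrival_weights eta eta'.
Proof.
  revert eta'; induction eta; intros [|b t]; simpl; try lra. apply Rmult_le_pos; auto.
  unfold arrival_weight. destruct (Nat.leb _ _); [|lra]. left; apply Rinv_0_lt_compat, INR_fact_lt_0.
Qed.

Lemma rbb_trans_arrival_weights L eta eta' :
  length eta = length eta' -> nsum eta = nsum eta' ->
  rbb_trans L eta eta' = INR (fact (Kocc eta)) * arrival_weights eta eta' * (/ INR L) ^ (Kocc eta).
Proof.
  intros Hl Hn. unfold rbb_trans. rewrite Hn, Nat.eqb_refl, andb_true_r.
  replace (arrival_weights eta eta') with
    (if forallb (fun p => Nat.leb (fst p) (snd p + ind_pos (fst p))) (combine eta eta')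
     then / Rprod_list (map (fun b => INR (fact b))
                         (map (fun p => (snd p + ind_pos (fst p) - fst p)%nat) (combine eta eta')))
     else 0).
  - destruct (forallb _ _); unfold Rdiv; lra.
  - clear Hn. revert eta' Hl; induction eta as [|a t IH]; intros [|b t'] H; simpl in *;
      try discriminate; [unfold Rprod_list; simpl; lra|].
    injection H as H. rewrite <- IH by auto. unfold arrival_weight.
    destruct (Nat.leb a (b + ind_pos a)); simpl; [|lra].
    destruct (forallb _ _); [|lra]. unfold Rprod_list at 1; simpl. now rewrite Rinv_mult.
Qed.

Definition remaining (eta : list nat) : nat := (nsum eta - Kocc eta)%nat.

Lemma remaining_cons e er : remaining (e :: er) = (depart e + remaining er)%nat.
Proof.
  unfold remaining, depart. rewrite nsum_cons, Kocc_cons.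
  pose proof (ind_pos_le e). pose proof (Kocc_le_nsum er). lia.
Qed.

Lemma binomial_fact_sum (x : R) T :
  sumR (fun i => x ^ (T - i) / (INR (fact i) * INR (fact (T - i)))) (seq 0 (S T))
  = (1 + x) ^ T / INR (fact T).
Proof.
  rewrite binomial, <- sumR_seq_sum_f_R0. unfold Rdiv. rewrite <- sumR_scal_r.
  apply sumR_ext. intros i Hi. unfold C. rewrite pow1.
  pose proof (INR_fact_neq_0 T). pose proof (INR_fact_neq_0 i). pose proof (INR_fact_neq_0 (T - i)).
  field. auto.
Qed.

(** Multinomial theorem: the arrival weights of [M - d] moving balls over [L] bins add up to
    [L^(M-d) / (M-d)!]. *)
Definition arrival_mass (L M d : nat) : R :=
  if Nat.leb d M then INR L ^ (M - d) / INR (fact (M - d)) else 0.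

Lemma sumR_arrival_weights L : forall eta M, length eta = L ->
  sumR (arrival_weights eta) (configs L M) = arrival_mass L M (remaining eta).
Proof.
  induction L as [|L IH]; intros eta M Hl.
  - destruct eta; [|discriminate]. unfold remaining, arrival_mass.
    destruct M; cbn; lra.
  - destruct eta as [|e er]; [discriminate|]. injection Hl as Hl.
    cbn [configs]. rewrite sumR_flat_map.
    rewrite (sumR_ext _ (fun k => arrival_weight e k * arrival_mass L (M - k) (remaining er)))
      by (intros k _; rewrite sumR_map; cbn [arrival_weights]; rewrite sumR_scal_l, IH; auto).
    rewrite remaining_cons. unfold arrival_mass at 2.
    destruct (Nat.leb_spec (depart e + remaining er) M) as [HS|HS].
    + rewrite (sumR_seq_window _ (S M) (depart e) (M - (depart e + remaining er))); [ | lia | ].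
      2:{ intros k Hk' Hk. rewrite arrival_weight_depart. unfold arrival_mass.
          destruct (Nat.leb_spec (depart e) k), (Nat.leb_spec (remaining er) (M - k)); lia || lra. }
      rewrite S_INR, Rplus_comm, <- binomial_fact_sum. apply sumR_ext. intros i Hi. apply in_seq in Hi.
      rewrite arrival_weight_depart. unfold arrival_mass.
      destruct (Nat.leb_spec (depart e) (depart e + i)); [|lia].
      destruct (Nat.leb_spec (remaining er) (M - (depart e + i))); [|lia].
      replace (depart e + i - depart e)%nat with i by lia.
      replace (M - (depart e + i) - remaining er)%nat with (M - (depart e + remaining er) - i)%nat by lia.
      unfold Rdiv. rewrite Rinv_mult. ring.
    + apply sumR_eq0. intros k Hk. apply in_seq in Hk. rewrite arrival_weight_depart. unfold arrival_mass.
      destruct (Nat.leb_spec (depart e) k), (Nat.leb_spec (remaining er) (M - k)); lia || lra.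
Qed.

Definition binom_pmf (K L b : nat) : R :=
  if Nat.leb b K then C K b * (/ INR L) ^ b * (1 - / INR L) ^ (K - b) else 0.

Lemma binom_pmf_le K L b : (b <= K)%nat ->
  binom_pmf K L b = C K b * (/ INR L) ^ b * (1 - / INR L) ^ (K - b).
Proof. intros H. unfold binom_pmf. destruct (Nat.leb_spec b K); [auto|lia]. Qed.

Lemma binom_pmf_gt K L b : (K < b)%nat -> binom_pmf K L b = 0.
Proof. intros H. unfold binom_pmf. destruct (Nat.leb_spec b K); [lia|auto]. Qed.

Lemma rbb_trans_first_bin L N x (f : nat -> R) : (1 <= L)%nat -> In x (configs L N) ->
  sumR (fun y => rbb_trans L x y * f (first_bin y)) (configs L N) =
  sumR (fun b => binom_pmf (Kocc x) L b * f (depart (first_bin x) + b)%nat) (seq 0 (S (Kocc x))).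
Proof.
  intros HL Hx. destruct L as [|L]; [lia|]. pose proof Hx as Hx'. apply In_configs in Hx' as [Hl Hn].
  destruct x as [|e er]; [discriminate|]. injection Hl as Hl. rewrite nsum_cons in Hn.
  unfold first_bin; cbn [nth]. set (K := Kocc (e :: er)).
  assert (HK : K = (ind_pos e + Kocc er)%nat) by reflexivity.
  assert (Hrem : remaining er = (nsum er - Kocc er)%nat) by reflexivity.
  pose proof (ind_pos_le e). pose proof (Kocc_le_nsum er).
  cbn [configs]. rewrite sumR_flat_map.
  rewrite (sumR_ext _ (fun k => INR (fact K) * arrival_weight e k * (/ INR (S L)) ^ K * f k
                                * arrival_mass L (N - k) (remaining er))).
  2:{ intros k Hk. apply in_seq in Hk. rewrite sumR_map, <- (sumR_arrival_weights L er (N - k) Hl).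
      rewrite <- sumR_scal_l. apply sumR_ext. intros y Hy. apply In_configs in Hy as [Hy1 Hy2].
      rewrite rbb_trans_arrival_weights by (simpl length; rewrite ?nsum_cons; lia).
      cbn [arrival_weights first_bin nth]. fold K. ring. }
  rewrite (sumR_seq_window _ (S N) (depart e) K); [ | unfold depart; lia | ].
  2:{ intros k Hk' Hk. rewrite arrival_weight_depart. unfold arrival_mass.
      destruct (Nat.leb_spec (depart e) k), (Nat.leb_spec (remaining er) (N - k));
        unfold depart in *; lia || lra. }
  apply sumR_ext. intros b Hb. apply in_seq in Hb.
  rewrite arrival_weight_depart, binom_pmf_le by lia. unfold arrival_mass.
  destruct (Nat.leb_spec (depart e) (depart e + b)); [|lia].
  destruct (Nat.leb_spec (remaining er) (N - (depart e + b))); [|unfold depart in *; lia].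
  replace (depart e + b - depart e)%nat with b by lia.
  replace (N - (depart e + b) - remaining er)%nat with (K - b)%nat by (unfold depart in *; lia).
  assert (HL1 : INR L + 1 <> 0) by (pose proof (pos_INR L); lra).
  replace (1 - / INR (S L)) with (INR L * / INR (S L)) by (rewrite S_INR; field; auto).
  rewrite Rpow_mult_distr.
  replace ((/ INR (S L)) ^ K) with ((/ INR (S L)) ^ b * (/ INR (S L)) ^ (K - b))
    by (rewrite <- pow_add; f_equal; lia).
  unfold C. pose proof (INR_fact_neq_0 b). pose proof (INR_fact_neq_0 (K - b)).
  field. auto.
Qed.

Lemma C_succ K i : INR (S i) * C (S K) (S i) = INR (S K) * C K i.
Proof.
  unfold C. replace (S K - S i)%nat with (K - i)%nat by lia.
  replace (fact (S K)) with (S K * fact K)%nat by reflexivity.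
  replace (fact (S i)) with (S i * fact i)%nat by reflexivity.
  rewrite !mult_INR. pose proof (INR_fact_neq_0 i). pose proof (INR_fact_neq_0 (K - i)).
  pose proof (pos_INR i). field. rewrite S_INR. repeat split; auto; lra.
Qed.

Lemma binomial_sum x y K : sumR (fun b => C K b * x ^ b * y ^ (K - b)) (seq 0 (S K)) = (x + y) ^ K.
Proof. now rewrite binomial, sumR_seq_sum_f_R0. Qed.

Lemma sumR_INR_mul_C K (g : nat -> R) :
  sumR (fun b => INR b * C (S K) b * g b) (seq 0 (S (S K)))
  = INR (S K) * sumR (fun i => C K i * g (S i)) (seq 0 (S K)).
Proof.
  rewrite sumR_seq_first. simpl (INR 0). rewrite !Rmult_0_l, Rplus_0_l, <- sumR_scal_l.
  apply sumR_ext. intros i _. rewrite C_succ. ring.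
Qed.

Lemma binomial_sum_mul_b x y K :
  sumR (fun b => INR b * (C K b * x ^ b * y ^ (K - b))) (seq 0 (S K)) = INR K * x * (x + y) ^ (K - 1).
Proof.
  destruct K as [|K]; [cbn; lra|].
  transitivity (sumR (fun b => INR b * C (S K) b * (x ^ b * y ^ (S K - b))) (seq 0 (S (S K))))
    ; [apply sumR_ext; intros; ring|].
  rewrite sumR_INR_mul_C. replace (S K - 1)%nat with K by lia.
  rewrite <- binomial_sum, <- !sumR_scal_l. apply sumR_ext. intros i _. simpl. ring.
Qed.

Lemma binomial_sum_mul_b_pred x y K :
  sumR (fun b => INR b * (INR b - 1) * (C K b * x ^ b * y ^ (K - b))) (seq 0 (S K))
  = INR K * (INR K - 1) * x ^ 2 * (x + y) ^ (K - 2).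
Proof.
  destruct K as [|K]; [cbn; lra|].
  transitivity (sumR (fun b => INR b * C (S K) b * ((INR b - 1) * x ^ b * y ^ (S K - b))) (seq 0 (S (S K))))
    ; [apply sumR_ext; intros; ring|].
  rewrite sumR_INR_mul_C.
  transitivity (INR (S K) * x * sumR (fun i => INR i * (C K i * x ^ i * y ^ (K - i))) (seq 0 (S K))).
  { rewrite Rmult_assoc. f_equal. rewrite <- sumR_scal_l. apply sumR_ext. intros i _.
    rewrite S_INR. simpl. ring. }
  rewrite binomial_sum_mul_b. replace (S K - 2)%nat with (K - 1)%nat by lia. rewrite S_INR. ring.
Qed.

Lemma binom_pmf_sum K L : sumR (binom_pmf K L) (seq 0 (S K)) = 1.
Proof.
  rewrite (sumR_ext _ (fun b => C K b * (/ INR L) ^ b * (1 - / INR L) ^ (K - b)))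
    by (intros b Hb; apply in_seq in Hb; apply binom_pmf_le; lia).
  rewrite binomial_sum. replace (/ INR L + (1 - / INR L)) with 1 by ring. apply pow1.
Qed.

Lemma binom_pmf_mean K L : sumR (fun b => binom_pmf K L b * INR b) (seq 0 (S K)) = INR K / INR L.
Proof.
  rewrite (sumR_ext _ (fun b => INR b * (C K b * (/ INR L) ^ b * (1 - / INR L) ^ (K - b))))
    by (intros b Hb; apply in_seq in Hb; rewrite binom_pmf_le by lia; ring).
  rewrite binomial_sum_mul_b. replace (/ INR L + (1 - / INR L)) with 1 by ring. rewrite pow1.
  unfold Rdiv. ring.
Qed.

Lemma binom_pmf_second_moment K L :
  sumR (fun b => binom_pmf K L b * INR b ^ 2) (seq 0 (S K))
  = INR K / INR L * (1 - / INR L) + (INR K / INR L) ^ 2.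
Proof.
  rewrite (sumR_ext _ (fun b => INR b * (INR b - 1) * (C K b * (/ INR L) ^ b * (1 - / INR L) ^ (K - b))
                               + INR b * (C K b * (/ INR L) ^ b * (1 - / INR L) ^ (K - b))))
    by (intros b Hb; apply in_seq in Hb; rewrite binom_pmf_le by lia; ring).
  rewrite sumR_plus, binomial_sum_mul_b_pred, binomial_sum_mul_b.
  replace (/ INR L + (1 - / INR L)) with 1 by ring. rewrite !pow1. unfold Rdiv. ring.
Qed.

Lemma binom_pmf_nonneg K L b : (1 <= L)%nat -> 0 <= binom_pmf K L b.
Proof.
  intros HL. unfold binom_pmf. destruct (Nat.leb b K); [|lra].
  assert (1 <= INR L) by (apply (le_INR 1); auto).
  assert (0 < / INR L <= 1) by (split; [apply Rinv_0_lt_compat; lra|rewrite <- Rinv_1; apply Rinv_le_contravar; lra]).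
  apply Rmult_le_pos; [apply Rmult_le_pos|]; try (apply pow_le; lra).
  unfold C. apply Rmult_le_pos; [apply pos_INR|]. left. apply Rinv_0_lt_compat.
  apply Rmult_lt_0_compat; apply INR_fact_lt_0.
Qed.

Lemma binom_pmf_le1 K L b : (1 <= L)%nat -> binom_pmf K L b <= 1.
Proof.
  intros HL. destruct (Nat.le_gt_cases b K).
  - rewrite <- (binom_pmf_sum K L). apply sumR_elem_le; [intros; now apply binom_pmf_nonneg|].
    apply in_seq; lia.
  - rewrite binom_pmf_gt by lia. lra.
Qed.

(** * Uniqueness and exchangeability of the stationary law *)

Lemma rbb_trans_nonneg L N x y : (1 <= L)%nat ->
  In x (configs L N) -> In y (configs L N) -> 0 <= rbb_trans L x y.
Proof.
  intros HL Hx Hy. apply In_configs in Hx, Hy.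
  rewrite rbb_trans_arrival_weights by lia. apply Rmult_le_pos; [apply Rmult_le_pos|].
  - apply pos_INR.
  - apply arrival_weights_nonneg.
  - apply pow_le. left. apply Rinv_0_lt_compat, lt_0_INR. lia.
Qed.

Lemma rbb_trans_sum L N x : (1 <= L)%nat -> In x (configs L N) ->
  sumR (rbb_trans L x) (configs L N) = 1.
Proof.
  intros HL Hx. rewrite <- (binom_pmf_sum (Kocc x) L).
  rewrite (sumR_ext (binom_pmf _ _) (fun b => binom_pmf (Kocc x) L b * 1)) by (intros; ring).
  rewrite <- (rbb_trans_first_bin L N x (fun _ => 1)) by auto. apply sumR_ext; intros; ring.
Qed.

Definition rbb_invariant (L N : nat) (d : list nat -> R) : Prop :=
  forall y, In y (configs L N) -> d y = sumR (fun x => d x * rbb_trans L x y) (configs L N).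

Definition dirac (x y : list nat) : R := if list_eq_dec Nat.eq_dec x y then 1 else 0.

Lemma sumR_dirac_r (g : list nat -> R) l y : NoDup l -> In y l -> sumR (fun x => g x * dirac x y) l = g y.
Proof.
  induction 1 as [|a l Ha Hl IH]; intros Hy; [destruct Hy|]. rewrite sumR_cons. unfold dirac at 1.
  destruct (list_eq_dec Nat.eq_dec a y) as [->|Hne].
  - rewrite sumR_eq0; [lra|]. intros x Hx. unfold dirac.
    destruct (list_eq_dec Nat.eq_dec x y); [subst; contradiction|lra].
  - destruct Hy as [->|Hy]; [congruence|]. rewrite IH; auto. lra.
Qed.

Lemma sumR_dirac_l (g : list nat -> R) l y : NoDup l -> In y l -> sumR (fun x => dirac y x * g x) l = g y.
Proof.
  intros. rewrite <- (sumR_dirac_r g l y) by auto. apply sumR_ext. intros x _. unfold dirac.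
  destruct (list_eq_dec Nat.eq_dec y x), (list_eq_dec Nat.eq_dec x y); subst; try congruence; lra.
Qed.

Fixpoint rbb_trans_iter (L N n : nat) (x y : list nat) : R :=
  match n with
  | O => dirac x y
  | S n => sumR (fun z => rbb_trans_iter L N n x z * rbb_trans L z y) (configs L N)
  end.

Lemma nsum_map_depart t : nsum (map depart t) = (nsum t - Kocc t)%nat.
Proof.
  induction t; [reflexivity|]. simpl map. rewrite !nsum_cons, Kocc_cons, IHt.
  pose proof (Kocc_le_nsum t). pose proof (ind_pos_le a). unfold depart. lia.
Qed.

Section Irreducibility.
Variables (L N : nat).
Hypothesis HL : (1 <= L)%nat.

Lemma rbb_trans_iter_nonneg n x y : In y (configs L N) -> 0 <= rbb_trans_iter L N n x y.
Proof.
  revert y; induction n; intros y Hy; simpl.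
  - unfold dirac; destruct (list_eq_dec _ _ _); lra.
  - apply sumR_nonneg. intros z Hz. apply Rmult_le_pos; auto. now apply (rbb_trans_nonneg L N).
Qed.

Lemma rbb_trans_iter_sum n x : In x (configs L N) -> sumR (rbb_trans_iter L N n x) (configs L N) = 1.
Proof.
  intros Hx. induction n; simpl.
  - rewrite (sumR_ext _ (fun y => dirac x y * (fun _ => 1) y)) by (intros; simpl; ring).
    apply (sumR_dirac_l (fun _ => 1)); auto. apply NoDup_configs.
  - rewrite sumR_swap, <- IHn. apply sumR_ext. intros z Hz.
    rewrite sumR_scal_l, rbb_trans_sum; auto. ring.
Qed.

Lemma rbb_invariant_iter d n y : rbb_invariant L N d -> In y (configs L N) ->
  d y = sumR (fun x => d x * rbb_trans_iter L N n x y) (configs L N).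
Proof.
  intros Hd. revert y; induction n; intros y Hy; simpl.
  - symmetry. apply sumR_dirac_r; auto. apply NoDup_configs.
  - rewrite (sumR_ext _ (fun x => sumR (fun z => d x * rbb_trans_iter L N n x z * rbb_trans L z y) (configs L N)))
      by (intros x _; rewrite <- sumR_scal_l; apply sumR_ext; intros; ring).
    rewrite sumR_swap, Hd by auto. apply sumR_ext. intros z Hz.
    rewrite IHn at 1 by auto. now rewrite <- sumR_scal_r.
Qed.

(** Moving every departing ball to the first bin has positive probability and, after [N]
    steps, gathers all balls in the first bin. *)
Definition step_to_first (x : list nat) : list nat :=
  match x with [] => [] | a :: t => (depart a + Kocc x)%nat :: map depart t end.

Definition concentrated : list nat := N :: repeat 0%nat (L - 1).

Lemma step_to_first_In_configs x : In x (configs L N) -> In (step_to_first x) (configs L N).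
Proof.
  intros Hx. apply In_configs in Hx as [H1 H2]. apply In_configs.
  destruct x as [|a t]; simpl; auto. simpl in H1. rewrite length_map. split; auto.
  rewrite nsum_cons in *. rewrite nsum_map_depart, Kocc_cons. pose proof (Kocc_le_nsum t).
  pose proof (ind_pos_le a). unfold depart. lia.
Qed.

Lemma iter_step_to_first_In_configs n x : In x (configs L N) ->
  In (Nat.iter n step_to_first x) (configs L N).
Proof. intros Hx. induction n; simpl; auto. now apply step_to_first_In_configs. Qed.

Lemma rbb_trans_step_to_first_pos x : In x (configs L N) -> 0 < rbb_trans L x (step_to_first x).
Proof.
  intros Hx. pose proof (step_to_first_In_configs x Hx) as Hf.
  apply In_configs in Hx, Hf. rewrite rbb_trans_arrival_weights by lia.
  apply Rmult_lt_0_compat; [apply Rmult_lt_0_compat|].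
  - apply INR_fact_lt_0.
  - destruct x as [|a t]; [simpl in Hx; lia|]. cbn [step_to_first arrival_weights].
    apply Rmult_lt_0_compat; [apply arrival_weight_pos; lia|].
    clear. induction t; simpl; [lra|]. apply Rmult_lt_0_compat; auto. now apply arrival_weight_pos.
  - apply pow_lt, Rinv_0_lt_compat, lt_0_INR. lia.
Qed.

Lemma rbb_trans_iter_step_to_first_pos n x : In x (configs L N) ->
  0 < rbb_trans_iter L N n x (Nat.iter n step_to_first x).
Proof.
  intros Hx. induction n.
  - simpl. unfold dirac. destruct (list_eq_dec _ _ _); [lra|congruence].
  - pose proof (iter_step_to_first_In_configs n x Hx) as Hn.
    set (z := Nat.iter n step_to_first x). set (y := Nat.iter (S n) step_to_first x).
    apply Rlt_le_trans with (rbb_trans_iter L N n x z * rbb_trans L z y).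
    + apply Rmult_lt_0_compat; [exact IHn|]. now apply rbb_trans_step_to_first_pos.
    + apply (sumR_elem_le (fun z => rbb_trans_iter L N n x z * rbb_trans L z y)); auto.
      intros w Hw. apply Rmult_le_pos; [now apply rbb_trans_iter_nonneg|].
      apply (rbb_trans_nonneg L N); auto. now apply (iter_step_to_first_In_configs (S n)).
Qed.

Lemma iter_step_to_first_concentrated x : In x (configs L N) ->
  Nat.iter N step_to_first x = concentrated.
Proof.
  intros Hx.
  (* each step moves at least one ball out of the bins 2..L while any remain *)
  assert (Htail : forall n, (nsum (tl (Nat.iter n step_to_first x)) <= nsum (tl x) - n)%nat).
  { induction n; [simpl; lia|]. simpl Nat.iter. destruct (Nat.iter n step_to_first x) as [|a t].
    - simpl. lia.
    - simpl tl in *. rewrite nsum_map_depart.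
      destruct (Nat.eq_dec (nsum t) 0); [lia|]. pose proof (Kocc_pos t). lia. }
  pose proof (iter_step_to_first_In_configs N x Hx) as Hc. specialize (Htail N).
  apply In_configs in Hx as [_ Hx].
  assert (nsum (tl x) <= N)%nat by (destruct x; simpl; [lia|]; rewrite nsum_cons in Hx; lia).
  apply In_configs in Hc as [H1 H2]. destruct (Nat.iter N step_to_first x) as [|a t]; [simpl in H1; lia|].
  simpl in Htail, H1. rewrite nsum_cons in H2. unfold concentrated.
  f_equal; [lia|]. rewrite (nsum_eq0 t) by lia. f_equal. lia.
Qed.

Lemma concentrated_In_configs : In concentrated (configs L N).
Proof.
  apply In_configs. unfold concentrated. rewrite nsum_cons, nsum_repeat0. simpl. rewrite repeat_length. lia.
Qed.

Lemma rbb_invariant_abs_iter d n y : rbb_invariant L N d -> In y (configs L N) ->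
  Rabs (d y) = sumR (fun x => Rabs (d x) * rbb_trans_iter L N n x y) (configs L N).
Proof.
  intros Hd Hy. set (g y := sumR (fun x => Rabs (d x) * rbb_trans_iter L N n x y) (configs L N)).
  assert (Hle : forall y, In y (configs L N) -> Rabs (d y) <= g y).
  { intros z Hz. rewrite (rbb_invariant_iter d n z Hd Hz). eapply Rle_trans; [apply sumR_abs|].
    apply sumR_le. intros x Hx. rewrite Rabs_mult, (Rabs_right (rbb_trans_iter _ _ _ _ _)); [apply Rle_refl|].
    now apply Rle_ge, rbb_trans_iter_nonneg. }
  assert (Hsum : sumR g (configs L N) = sumR (fun x => Rabs (d x)) (configs L N)).
  { unfold g. rewrite sumR_swap. apply sumR_ext. intros x Hx.
    rewrite sumR_scal_l, rbb_trans_iter_sum; auto. ring. }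
  change (Rabs (d y) = g y). enough (g y - Rabs (d y) = 0) by (clearbody g; lra).
  apply (sumR_eq0_nonneg (fun y => g y - Rabs (d y)) (configs L N)); auto.
  - intros z Hz. pose proof (Hle z Hz). clearbody g; lra.
  - rewrite sumR_minus. clearbody g; lra.
Qed.

Lemma rbb_invariant_sum0 d : rbb_invariant L N d -> sumR d (configs L N) = 0 ->
  forall x, In x (configs L N) -> d x = 0.
Proof.
  intros Hd Hs. set (Q x := rbb_trans_iter L N N x concentrated).
  assert (Qpos : forall x, In x (configs L N) -> 0 < Q x).
  { intros x Hx. unfold Q. rewrite <- (iter_step_to_first_concentrated x) by auto.
    now apply rbb_trans_iter_step_to_first_pos. }
  assert (Habs : Rabs (sumR (fun x => d x * Q x) (configs L N))
                 = sumR (fun x => Rabs (d x * Q x)) (configs L N)).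
  { unfold Q. rewrite <- rbb_invariant_iter, (rbb_invariant_abs_iter d N)
      by (auto; apply concentrated_In_configs).
    apply sumR_ext. intros x Hx. rewrite Rabs_mult, (Rabs_right (rbb_trans_iter _ _ _ _ _)); auto.
    apply Rle_ge, Rlt_le, Qpos, Hx. }
  destruct (sumR_abs_eq_same_sign _ _ Habs) as [Hsign|Hsign].
  - assert (Hp : forall x, In x (configs L N) -> 0 <= d x).
    { intros x Hx. pose proof (Hsign x Hx). pose proof (Qpos x Hx).
      destruct (Rle_dec 0 (d x)); auto. pose proof (Rmult_neg_pos (d x) (Q x)). lra. }
    now apply sumR_eq0_nonneg.
  - assert (Hn : forall x, In x (configs L N) -> 0 <= - d x).
    { intros x Hx. pose proof (Hsign x Hx). pose proof (Qpos x Hx).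
      destruct (Rle_dec (d x) 0); [lra|]. pose proof (Rmult_lt_0_compat (d x) (Q x)). lra. }
    intros x Hx. enough (- d x = 0) by lra. apply (sumR_eq0_nonneg (fun x => - d x) (configs L N)); auto.
    rewrite (sumR_ext _ (fun x => -1 * d x)), sumR_scal_l, Hs by (intros; ring). ring.
Qed.

Lemma rbb_stationary_unique nu1 nu2 : rbb_stationary L N nu1 -> rbb_stationary L N nu2 ->
  forall x, In x (configs L N) -> nu1 x = nu2 x.
Proof.
  intros [_ [S1 T1]] [_ [S2 T2]] x Hx. enough (nu1 x - nu2 x = 0) by lra.
  apply (rbb_invariant_sum0 (fun x => nu1 x - nu2 x)); auto.
  - intros y Hy. unfold sumR in T1, T2. rewrite T1, T2 by auto. fold (sumR (fun z => nu1 z * rbb_trans L z y) (configs L N)).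
    fold (sumR (fun z => nu2 z * rbb_trans L z y) (configs L N)).
    rewrite <- sumR_minus. apply sumR_ext. intros; ring.
  - rewrite sumR_minus. unfold sumR. rewrite S1, S2. ring.
Qed.

Lemma rbb_stationary_swap nu i j : (i < L)%nat -> (j < L)%nat -> rbb_stationary L N nu ->
  forall x, In x (configs L N) -> nu (swap 0%nat i j x) = nu x.
Proof.
  intros Hi Hj Hs. apply rbb_stationary_unique; auto.
  destruct Hs as [P1 [P2 P3]]. split; [|split].
  - intros x Hx. apply P1. now apply swap_In_configs.
  - rewrite <- P2. fold (sumR (fun x => nu (swap 0%nat i j x)) (configs L N)). now apply sumR_configs_swap.
  - intros y Hy. rewrite P3 by (now apply swap_In_configs).
    fold (sumR (fun x => nu x * rbb_trans L x (swap 0%nat i j y)) (configs L N)).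
    fold (sumR (fun x => nu (swap 0%nat i j x) * rbb_trans L x y) (configs L N)).
    rewrite <- (sumR_configs_swap L N i j (fun x => nu x * rbb_trans L x (swap 0%nat i j y))) by auto.
    apply sumR_ext. intros x Hx. apply In_configs in Hx, Hy.
    rewrite rbb_trans_swap; lia || reflexivity.
Qed.

End Irreducibility.

Definition expect (L N : nat) (nu : list nat -> R) (g : list nat -> R) : R :=
  sumR (fun x => nu x * g x) (configs L N).

Lemma expect_ext L N nu f g : (forall x, In x (configs L N) -> f x = g x) ->
  expect L N nu f = expect L N nu g.
Proof. intros H. unfold expect. apply sumR_ext. intros x Hx. now rewrite H. Qed.

Lemma expect_plus L N nu f g : expect L N nu (fun x => f x + g x) = expect L N nu f + expect L N nu g.
Proof. unfold expect. rewrite <- sumR_plus. apply sumR_ext; intros; ring. Qed.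

Lemma expect_minus L N nu f g : expect L N nu (fun x => f x - g x) = expect L N nu f - expect L N nu g.
Proof. unfold expect. rewrite <- sumR_minus. apply sumR_ext; intros; ring. Qed.

Lemma expect_scal L N nu c f : expect L N nu (fun x => c * f x) = c * expect L N nu f.
Proof. unfold expect. rewrite <- sumR_scal_l. apply sumR_ext; intros; ring. Qed.

Lemma expect_sumR {A} L N nu (F : A -> list nat -> R) l :
  expect L N nu (fun x => sumR (fun a => F a x) l) = sumR (fun a => expect L N nu (F a)) l.
Proof. unfold expect. rewrite <- sumR_swap. apply sumR_ext. intros x _. now rewrite <- sumR_scal_l. Qed.

Lemma expect_const L N nu c : rbb_stationary L N nu -> expect L N nu (fun _ => c) = c.
Proof. intros [_ [H _]]. unfold expect. rewrite sumR_scal_r. unfold sumR. rewrite H. ring. Qed.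

Lemma expect_abs_le L N nu g h : rbb_stationary L N nu ->
  (forall x, In x (configs L N) -> Rabs (g x) <= h x) -> Rabs (expect L N nu g) <= expect L N nu h.
Proof.
  intros [P1 _] Hg. unfold expect. eapply Rle_trans; [apply sumR_abs|]. apply sumR_le. intros x Hx.
  rewrite Rabs_mult, Rabs_right by (apply Rle_ge, P1; auto). apply Rmult_le_compat_l; auto.
Qed.

Lemma expect_bounded01 L N nu g : rbb_stationary L N nu ->
  (forall x, In x (configs L N) -> 0 <= g x <= 1) -> 0 <= expect L N nu g <= 1.
Proof.
  intros Hs Hg. pose proof Hs as [P1 _]. split.
  - apply sumR_nonneg. intros x Hx. apply Rmult_le_pos; [apply P1|apply Hg]; auto.
  - rewrite <- (expect_const L N nu 1 Hs). apply sumR_le. intros x Hx.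
    specialize (P1 x Hx). specialize (Hg x Hx). nra.
Qed.

Lemma expect_step L N nu g : rbb_stationary L N nu ->
  expect L N nu g = expect L N nu (fun x => sumR (fun y => rbb_trans L x y * g y) (configs L N)).
Proof.
  intros [_ [_ H]]. unfold expect.
  rewrite (sumR_ext (fun y => nu y * g y) (fun y => sumR (fun x => nu x * rbb_trans L x y * g y) (configs L N))).
  - rewrite sumR_swap. apply sumR_ext. intros x _. rewrite <- sumR_scal_l. apply sumR_ext; intros; ring.
  - intros y Hy. rewrite H by auto. fold (sumR (fun x => nu x * rbb_trans L x y) (configs L N)).
    now rewrite sumR_scal_r.
Qed.

Lemma expect_first_bin_step L N nu f : (1 <= L)%nat -> rbb_stationary L N nu ->
  expect L N nu (fun x => f (first_bin x)) =
  expect L N nu (fun x => sumR (fun b => binom_pmf (Kocc x) L b * f (depart (first_bin x) + b)%nat)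
                               (seq 0 (S (Kocc x)))).
Proof.
  intros HL Hs. rewrite expect_step by auto. apply expect_ext. intros x Hx.
  now apply rbb_trans_first_bin.
Qed.

Lemma expect_swap L N nu i j g : (1 <= L)%nat -> (i < L)%nat -> (j < L)%nat -> rbb_stationary L N nu ->
  expect L N nu (fun x => g (swap 0%nat i j x)) = expect L N nu g.
Proof.
  intros HL Hi Hj Hs. unfold expect.
  rewrite <- (sumR_configs_swap L N i j (fun x => nu x * g x)) by auto. apply sumR_ext. intros x Hx.
  now rewrite (rbb_stationary_swap L N HL nu i j).
Qed.

Definition occupied (j : nat) (x : list nat) : R := INR (ind_pos (nth j x 0%nat)).

Definition occupied_count (x : list nat) : R := INR (Kocc x).

Lemma occupied_count_sumR x : occupied_count x = sumR (fun a => INR (ind_pos a)) x.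
Proof. unfold occupied_count, Kocc. now rewrite INR_nsum, sumR_map. Qed.

Lemma sumR_nth F x : sumR (fun j => F (nth j x 0%nat)) (seq 0 (length x)) = sumR F x.
Proof. induction x; [reflexivity|]. simpl length. now rewrite sumR_seq_first, sumR_cons, <- IHx. Qed.

Lemma occupied_bounded01 j x : 0 <= occupied j x <= 1.
Proof. unfold occupied. destruct (ind_pos_cases (nth j x 0%nat)) as [[-> _]|[-> _]]; simpl; lra. Qed.

Section StationaryMoments.
Variables (L N : nat) (nu : list nat -> R).
Hypothesis HL : (2 <= L)%nat.
Hypothesis Hs : rbb_stationary L N nu.

Definition occ1 : R := expect L N nu (occupied 0).
Definition occ2 : R := expect L N nu (fun x => occupied 0 x * occupied 1 x).

Lemma INR_L_pos : 0 < INR L.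
Proof. apply lt_0_INR. lia. Qed.

Lemma expect_nth_exchangeable (H : nat -> R -> R) j : (j < L)%nat ->
  expect L N nu (fun x => H (nth j x 0%nat) (occupied_count x))
  = expect L N nu (fun x => H (first_bin x) (occupied_count x)).
Proof.
  intros Hj. rewrite <- (expect_swap L N nu 0 j (fun x => H (first_bin x) (occupied_count x))) by (auto; lia).
  apply expect_ext. intros x Hx. apply In_configs in Hx as [Hl _]. unfold first_bin, occupied_count.
  rewrite nth_swap, Kocc_swap by lia. unfold transpose. now destruct j.
Qed.

Lemma expect_sumR_bins (H : nat -> R -> R) :
  expect L N nu (fun x => sumR (fun a => H a (occupied_count x)) x)
  = INR L * expect L N nu (fun x => H (first_bin x) (occupied_count x)).
Proof.
  rewrite (expect_ext _ _ _ _ (fun x => sumR (fun j => H (nth j x 0%nat) (occupied_count x)) (seq 0 L))).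
  2:{ intros x Hx. apply In_configs in Hx as [<- _]. now rewrite (sumR_nth (fun a => H a (occupied_count x))). }
  rewrite expect_sumR, (sumR_ext _ (fun _ => expect L N nu (fun x => H (first_bin x) (occupied_count x)))).
  - now rewrite sumR_const, length_seq.
  - intros j Hj. apply in_seq in Hj. apply expect_nth_exchangeable. lia.
Qed.

Lemma expect_first_bin : expect L N nu (fun x => INR (first_bin x)) = INR N / INR L.
Proof.
  pose proof (expect_sumR_bins (fun a _ => INR a)) as E. cbv beta in E.
  rewrite (expect_ext _ _ _ _ (fun _ => INR N)), expect_const in E by
    (auto; intros x Hx; apply In_configs in Hx as [_ <-]; now rewrite INR_nsum).
  pose proof INR_L_pos. rewrite E. field. lra.
Qed.

Lemma expect_occupied_count : expect L N nu occupied_count = INR L * occ1.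
Proof.
  unfold occ1. rewrite (expect_ext _ _ _ (occupied 0) (fun x => INR (ind_pos (first_bin x)))) by reflexivity.
  rewrite <- (expect_sumR_bins (fun a _ => INR (ind_pos a))).
  apply expect_ext. intros x _. apply occupied_count_sumR.
Qed.

Lemma expect_first_bin_mul_count :
  expect L N nu (fun x => INR (first_bin x) * occupied_count x) = INR N * occ1.
Proof.
  pose proof (expect_sumR_bins (fun a k => INR a * k)) as E. cbv beta in E.
  rewrite (expect_ext _ _ _ _ (fun x => INR N * occupied_count x)), expect_scal, expect_occupied_count in E.
  - pose proof INR_L_pos. apply (Rmult_eq_reg_l (INR L)); [|lra]. rewrite <- E. ring.
  - intros x Hx. apply In_configs in Hx as [_ <-]. now rewrite sumR_scal_r, INR_nsum.
Qed.

Lemma expect_occupied_count_sq :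
  expect L N nu (fun x => occupied_count x ^ 2) = INR L * expect L N nu (fun x => occupied 0 x * occupied_count x).
Proof.
  rewrite (expect_ext _ _ _ (fun x => occupied 0 x * _)
             (fun x => INR (ind_pos (first_bin x)) * occupied_count x)) by reflexivity.
  rewrite <- (expect_sumR_bins (fun a k => INR (ind_pos a) * k)).
  apply expect_ext. intros x _. rewrite sumR_scal_r, <- occupied_count_sumR. ring.
Qed.

Lemma expect_occupied_mul_count :
  expect L N nu (fun x => occupied 0 x * occupied_count x) = occ1 + (INR L - 1) * occ2.
Proof.
  rewrite (expect_ext _ _ _ _ (fun x => sumR (fun j => occupied 0 x * occupied j x) (seq 0 L))).
  2:{ intros x Hx. apply In_configs in Hx as [<- _]. rewrite occupied_count_sumR, <- sumR_scal_l.
      now rewrite <- (sumR_nth (fun a => occupied 0 x * INR (ind_pos a))). }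
  rewrite expect_sumR. replace L with (S (L - 1)) at 1 by lia. rewrite sumR_seq_first.
  rewrite (sumR_ext _ (fun _ => occ2)).
  - rewrite sumR_const, length_seq, minus_INR by lia. unfold occ1. simpl (INR 1). f_equal.
    apply expect_ext. intros x _. unfold occupied.
    destruct (ind_pos_cases (nth 0 x 0%nat)) as [[-> _]|[-> _]]; simpl; ring.
  - intros j Hj. apply in_seq in Hj. unfold occ2.
    rewrite <- (expect_swap L N nu 1 (S j) (fun x => occupied 0 x * occupied 1 x)) by (auto; lia).
    apply expect_ext. intros x Hx. apply In_configs in Hx as [Hl _]. unfold occupied.
    rewrite !nth_swap by lia. unfold transpose. now destruct j.
Qed.

(** The second moment of the first bin is preserved by one step; with the binomial moments
    and exchangeability this gives a relation between [N/L], [occ1] and [occ2]. *)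
Lemma stationary_second_moment_identity :
  INR N / INR L * (-2) + 2 * occ1 + 2 * (INR N / INR L) * occ1 - 2 * occ1 / INR L
  - (INR L - 1) / INR L * occ2 = 0.
Proof.
  pose proof INR_L_pos as HLp.
  pose proof (expect_first_bin_step L N nu (fun a => INR a ^ 2) ltac:(lia) Hs) as E.
  cbv beta in E.
  rewrite (expect_ext _ _ _ (fun x => sumR _ _)
     (fun x => (-2) * INR (first_bin x) + 1 * occupied 0 x + (2 / INR L) * (INR (first_bin x) * occupied_count x)
        + (-2 / INR L) * (occupied 0 x * occupied_count x)
        + ((1 - / INR L) / INR L) * occupied_count x + (/ INR L ^ 2) * (occupied_count x ^ 2)
        + INR (first_bin x) ^ 2)) in E.
  2:{ intros x Hx.
      rewrite (sumR_ext _ (fun b => INR (depart (first_bin x)) ^ 2 * binom_pmf (Kocc x) L b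
               + 2 * INR (depart (first_bin x)) * (binom_pmf (Kocc x) L b * INR b)
               + binom_pmf (Kocc x) L b * INR b ^ 2)) by (intros; rewrite plus_INR; ring).
      rewrite !sumR_plus, !sumR_scal_l, binom_pmf_sum, binom_pmf_mean, binom_pmf_second_moment.
      unfold depart, occupied, occupied_count, first_bin.
      destruct (ind_pos_cases (nth 0 x 0%nat)) as [[-> ->]|[-> ?]].
      - simpl. field. lra.
      - rewrite minus_INR by lia. simpl (INR 1). field. lra. }
  rewrite !expect_plus, !expect_scal in E.
  rewrite expect_first_bin_mul_count, expect_occupied_count_sq, expect_occupied_mul_count,
    expect_occupied_count, expect_first_bin in E.
  fold occ1 in E. set (m2 := expect L N nu (fun x => INR (first_bin x) ^ 2)) in E.
  apply (Rplus_eq_reg_r m2). rewrite Rplus_0_l. rewrite E at 2. field. lra.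
Qed.

End StationaryMoments.

Definition kron (a b : nat) : R := if Nat.eqb a b then 1 else 0.

Lemma kron_bounded01 a b : 0 <= kron a b <= 1.
Proof. unfold kron; destruct (Nat.eqb a b); lra. Qed.

Lemma sumR_seq_kron (g : nat -> R) d j n :
  sumR (fun b => g b * kron (d + b) j) (seq 0 n) =
  if (Nat.leb d j && Nat.ltb j (d + n))%bool then g (j - d)%nat else 0.
Proof.
  destruct (Nat.leb_spec d j), (Nat.ltb_spec j (d + n)); simpl.
  1:{ rewrite (sumR_seq_single _ n (j - d)) by (lia || (intros k _ Hk; unfold kron;
      destruct (Nat.eqb_spec (d + k) j); [lia|ring])).
    unfold kron. replace (d + (j - d))%nat with j by lia. rewrite Nat.eqb_refl. ring. }
  all: apply sumR_eq0; intros b Hb; apply in_seq in Hb; unfold kron;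
      destruct (Nat.eqb_spec (d + b) j); [lia|ring].
Qed.

Lemma marginal_expect L N nu k : marginal L N nu k =
  expect L N nu (fun x => if list_eq_dec Nat.eq_dec (firstn (length k) x) k then 1 else 0).
Proof.
  unfold marginal. fold (sumR nu (filter (fun eta => if list_eq_dec Nat.eq_dec (firstn (length k) eta) k
                                                  then true else false) (configs L N))).
  rewrite sumR_filter. unfold expect. apply sumR_ext. intros x _. destruct (list_eq_dec _ _ _); ring.
Qed.

Lemma marginal_single L N nu a : (1 <= L)%nat ->
  marginal L N nu [a] = expect L N nu (fun x => kron (first_bin x) a).
Proof.
  intros HL. rewrite marginal_expect. apply expect_ext. intros x Hx. apply In_configs in Hx as [Hl _].
  destruct x as [|e t]; simpl in Hl; [lia|]. unfold kron, first_bin. cbn [firstn length nth].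
  destruct (list_eq_dec Nat.eq_dec [e] [a]), (Nat.eqb_spec e a); congruence.
Qed.

Lemma marginal_pair L N nu a b : (2 <= L)%nat ->
  marginal L N nu [a; b] = expect L N nu (fun x => kron (first_bin x) a * kron (nth 1 x 0%nat) b).
Proof.
  intros HL. rewrite marginal_expect. apply expect_ext. intros x Hx. apply In_configs in Hx as [Hl _].
  destruct x as [|e [|f t]]; simpl in Hl; try lia. unfold kron, first_bin. cbn [firstn length nth].
  destruct (list_eq_dec Nat.eq_dec [e; f] [a; b]) as [E|E], (Nat.eqb_spec e a), (Nat.eqb_spec f b);
    subst; try congruence; try ring; inversion E; contradiction.
Qed.

Section StationaryMarginals.
Variables (L N : nat) (nu : list nat -> R).
Hypothesis HL : (2 <= L)%nat.
Hypothesis Hs : rbb_stationary L N nu.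

Lemma occupied_kron j x : occupied j x = 1 - kron (nth j x 0%nat) 0.
Proof. unfold occupied, kron. destruct (nth j x 0%nat); simpl; ring. Qed.

Lemma occ1_marginal : occ1 L N nu = 1 - marginal L N nu [0%nat].
Proof.
  rewrite marginal_single by lia. unfold occ1. rewrite <- (expect_const L N nu 1 Hs), <- expect_minus.
  apply expect_ext. intros x _. now rewrite occupied_kron.
Qed.

Lemma occ2_marginal : occ2 L N nu = 1 - 2 * marginal L N nu [0%nat] + marginal L N nu [0%nat; 0%nat].
Proof.
  rewrite marginal_pair, marginal_single by lia. unfold occ2.
  pose proof (expect_nth_exchangeable L N nu HL Hs (fun a _ => kron a 0) 1 ltac:(lia)) as Sym.
  cbv beta in Sym.
  rewrite (expect_ext _ _ _ _ (fun x => 1 + (-1) * kron (first_bin x) 0 + (-1) * kron (nth 1 x 0%nat) 0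
                                    + 1 * (kron (first_bin x) 0 * kron (nth 1 x 0%nat) 0)))
    by (intros x _; rewrite !occupied_kron; unfold first_bin; ring).
  rewrite !expect_plus, !expect_scal, Sym, expect_const by auto. ring.
Qed.

Lemma expect_occupied_fraction_sq c :
  expect L N nu (fun x => (occupied_count x / INR L - c) ^ 2)
  = (occ1 L N nu + (INR L - 1) * occ2 L N nu) / INR L - 2 * c * occ1 L N nu + c ^ 2.
Proof.
  pose proof (INR_L_pos L HL).
  rewrite (expect_ext _ _ _ _ (fun x => (/ INR L ^ 2) * occupied_count x ^ 2
                                    + (-2 * c / INR L) * occupied_count x + c ^ 2))
    by (intros; field; lra).
  rewrite !expect_plus, !expect_scal, expect_const, expect_occupied_count_sq, expect_occupied_mul_count,
    expect_occupied_count by auto.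
  field. lra.
Qed.

(** Finite-[L] version of the M/D/1 balance equation: the first bin moves from [i] to [j] when
    it receives [j + 1(i>0) - i] balls. *)
Lemma marginal_first_bin_balance j : marginal L N nu [j] =
  sumR (fun i => expect L N nu (fun x => kron (first_bin x) i * binom_pmf (Kocc x) L (j + ind_pos i - i)))
       (seq 0 (S (S j))).
Proof.
  rewrite marginal_single, <- expect_sumR by lia.
  rewrite (expect_first_bin_step L N nu (fun a => kron a j)) by (auto; lia).
  apply expect_ext. intros x _. rewrite sumR_seq_kron.
  rewrite (sumR_ext _ (fun i => (fun i => binom_pmf (Kocc x) L (j + ind_pos i - i)) i * kron (0 + i) (first_bin x)))
    by (intros i _; unfold kron; rewrite Nat.eqb_sym; simpl; ring).
  rewrite sumR_seq_kron, Nat.sub_0_r. unfold depart.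
  set (h := first_bin x) in *. set (K := Kocc x).
  destruct (ind_pos_cases h) as [[-> Hh]|[-> Hh]];
    destruct (Nat.leb_spec (h - 0) j), (Nat.leb_spec (h - 1) j), (Nat.ltb_spec j (h - 0 + S K)),
      (Nat.ltb_spec j (h - 1 + S K)), (Nat.ltb_spec h (0 + S (S j))); simpl; try lia;
    try (rewrite binom_pmf_gt by lia); try (f_equal; lia); reflexivity.
Qed.

End StationaryMarginals.

(** * Binomial(K, 1/L) is close to Poisson(K/L) *)

Lemma Rabs_le_inv x a : Rabs x <= a -> - a <= x <= a.
Proof. intros H. pose proof (Rle_abs x). pose proof (Rle_abs (- x)). rewrite Rabs_Ropp in *. lra. Qed.

Lemma exp_le_compat a b : a <= b -> exp a <= exp b.
Proof. intros [H| ->]; [left; now apply exp_increasing|lra]. Qed.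

Lemma exp_pow a n : exp a ^ n = exp (INR n * a).
Proof.
  induction n; simpl pow; [now rewrite Rmult_0_l, exp_0|].
  rewrite IHn, <- exp_plus, S_INR. f_equal. ring.
Qed.

Lemma Rabs_exp_diff_le a b : a <= 0 -> b <= 0 -> Rabs (exp a - exp b) <= Rabs (a - b).
Proof.
  assert (G : forall a b, a <= b -> b <= 0 -> Rabs (exp a - exp b) <= Rabs (a - b)).
  { intros a0 b0 Hab Hb. rewrite Rabs_minus_sym, (Rabs_minus_sym a0).
    pose proof (exp_le_compat _ _ Hab). rewrite !Rabs_right by lra.
    replace (exp a0) with (exp b0 * exp (a0 - b0)) by (rewrite <- exp_plus; f_equal; ring).
    pose proof (exp_ineq1_le (a0 - b0)). pose proof (exp_pos b0).
    assert (exp b0 <= 1) by (rewrite <- exp_0; now apply exp_le_compat).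
    assert (exp (a0 - b0) <= 1) by (rewrite <- exp_0; apply exp_le_compat; lra).
    assert (exp b0 * (1 - exp (a0 - b0)) <= 1 * (b0 - a0)) by (apply Rmult_le_compat; lra). lra. }
  intros Ha Hb. destruct (Rle_dec a b); [now apply G|].
  rewrite Rabs_minus_sym, (Rabs_minus_sym a). apply G; lra.
Qed.

Lemma Rabs_pow_diff_le M a b m : 1 <= M -> 0 <= a <= M -> 0 <= b <= M ->
  Rabs (a ^ m - b ^ m) <= INR m * M ^ m * Rabs (a - b).
Proof.
  intros HM Ha Hb. induction m.
  - simpl. rewrite Rminus_diag, Rabs_R0. lra.
  - replace (a ^ S m - b ^ S m) with (a * (a ^ m - b ^ m) + b ^ m * (a - b)) by (simpl; ring).
    eapply Rle_trans; [apply Rabs_triang|]. rewrite !Rabs_mult.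
    rewrite (Rabs_right a), (Rabs_right (b ^ m)) by (apply Rle_ge; try apply pow_le; lra).
    assert (b ^ m <= M ^ m) by (apply pow_incr; lra). pose proof (pow_le M m).
    pose proof (Rabs_pos (a - b)). pose proof (Rabs_pos (a ^ m - b ^ m)). pose proof (pos_INR m).
    assert (a * Rabs (a ^ m - b ^ m) <= M * (INR m * M ^ m * Rabs (a - b))) by (apply Rmult_le_compat; lra).
    assert (b ^ m * Rabs (a - b) <= M * M ^ m * Rabs (a - b)) by (apply Rmult_le_compat_r; nra).
    rewrite S_INR. simpl pow. nra.
Qed.

Lemma one_minus_inv_exp_bounds l : 2 <= l -> exp (- / (l - 1)) <= 1 - / l <= exp (- / l).
Proof.
  intros Hl. split.
  - pose proof (exp_ineq1_le (/ (l - 1))) as H1. rewrite exp_Ropp.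
    replace (1 + / (l - 1)) with (/ (1 - / l)) in H1 by (field; lra).
    assert (0 < 1 - / l) by (assert (/ l <= / 2) by (apply Rinv_le_contravar; lra); lra).
    apply Rinv_le_contravar in H1; [|apply Rinv_0_lt_compat; lra]. now rewrite Rinv_inv in H1.
  - pose proof (exp_ineq1_le (- / l)). lra.
Qed.

Definition falling (K m : nat) : R := INR (fact K) / INR (fact (K - m)).

Lemma falling_bounds K m : (m <= K)%nat -> INR (K - m) ^ m <= falling K m <= INR K ^ m.
Proof.
  induction m; intros Hm.
  - unfold falling. rewrite Nat.sub_0_r. pose proof (INR_fact_neq_0 K). simpl. split; right; field; auto.
  - assert (E : falling K (S m) = falling K m * INR (K - m)).
    { unfold falling. replace (K - m)%nat with (S (K - S m)) at 1 by lia.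
      replace (fact (S (K - S m))) with (S (K - S m) * fact (K - S m))%nat by reflexivity.
      rewrite mult_INR. replace (INR (S (K - S m))) with (INR (K - m)) by (f_equal; lia).
      pose proof (INR_fact_neq_0 (K - S m)). assert (INR (K - m) <> 0) by (apply not_0_INR; lia).
      field; auto. }
    rewrite E. destruct (IHm ltac:(lia)) as [H1 H2].
    assert (INR (K - S m) <= INR (K - m)) by (apply le_INR; lia).
    assert (INR (K - m) <= INR K) by (apply le_INR; lia).
    pose proof (pos_INR (K - S m)). pose proof (pos_INR (K - m)).
    assert (INR (K - S m) ^ m <= INR (K - m) ^ m) by (apply pow_incr; lra).
    pose proof (pow_le (INR (K - S m)) m ltac:(lra)).
    simpl pow. split.
    + rewrite Rmult_comm. apply Rmult_le_compat; lra.
    + rewrite (Rmult_comm (INR K)). apply Rmult_le_compat; lra.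
Qed.

Lemma C_falling K m : C K m = falling K m / INR (fact m).
Proof. unfold C, falling. pose proof (INR_fact_neq_0 m). pose proof (INR_fact_neq_0 (K - m)). field. auto. Qed.

Lemma poisson_bounded01 rho m : 0 < rho < 1 -> 0 <= poisson rho m <= 1.
Proof.
  intros H. unfold poisson. pose proof (exp_pos (- rho)).
  assert (exp (- rho) <= 1) by (rewrite <- exp_0; apply exp_le_compat; lra).
  assert (0 <= rho ^ m <= 1) by (split; [apply pow_le; lra|rewrite <- (pow1 m); apply pow_incr; lra]).
  assert (1 <= INR (fact m)) by (apply (le_INR 1); pose proof (lt_O_fact m); lia).
  assert (0 < / INR (fact m) <= 1) by (split; [apply Rinv_0_lt_compat; lra|rewrite <- Rinv_1; apply Rinv_le_contravar; lra]).
  unfold Rdiv. split; [apply Rmult_le_pos; [apply Rmult_le_pos|]; lra|].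
  assert (exp (- rho) * rho ^ m <= 1 * 1) by (apply Rmult_le_compat; lra).
  assert (exp (- rho) * rho ^ m * / INR (fact m) <= 1 * 1) by (apply Rmult_le_compat; try lra; apply Rmult_le_pos; lra).
  lra.
Qed.

Definition poisson_error_const (m : nat) : R := 2 * INR m * 2 ^ m + 2.

Lemma poisson_error_const_pos m : 0 < poisson_error_const m.
Proof. unfold poisson_error_const. pose proof (pos_INR m). pose proof (pow_le 2 m ltac:(lra)). nra. Qed.

Lemma poisson_error_const_mono m n : (m <= n)%nat -> poisson_error_const m <= poisson_error_const n.
Proof.
  intros H. unfold poisson_error_const. pose proof (le_INR _ _ H). pose proof (pos_INR m).
  assert (2 ^ m <= 2 ^ n) by (apply Rle_pow; lra || auto). pose proof (pow_le 2 m ltac:(lra)).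
  assert (INR m * 2 ^ m <= INR n * 2 ^ n) by (apply Rmult_le_compat; lra). lra.
Qed.

Section BinomialPoisson.
Variables (K L m : nat) (rho d : R).
Hypothesis HL : (2 <= L)%nat.
Hypothesis Hrho : 0 < rho < 1.
Hypothesis Hd : 0 < d <= rho / 4.
Hypothesis Hm : INR m <= d * INR L.
Hypothesis HK : Rabs (INR K / INR L - rho) < d.

Lemma INR_L_ge2 : 2 <= INR L.
Proof. apply (le_INR 2), HL. Qed.

Lemma K_over_L_near : rho - d < INR K / INR L < rho + d.
Proof. apply Rabs_def2 in HK. lra. Qed.

Lemma m_le_K : (m <= K)%nat.
Proof.
  pose proof INR_L_ge2. pose proof K_over_L_near. set (l := INR L) in *. apply INR_le.
  replace (INR K) with (INR K / l * l) by (field; lra). pose proof (pos_INR m). nra.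
Qed.

Lemma falling_pow_approx : Rabs (falling K m * (/ INR L) ^ m - rho ^ m) <= 2 * INR m * 2 ^ m * d.
Proof.
  pose proof INR_L_ge2 as Hl. pose proof K_over_L_near as Hx. pose proof (pos_INR m) as Hm0.
  set (l := INR L) in *.
  destruct (falling_bounds K m m_le_K) as [F1 F2].
  assert (Hinv : 0 <= (/ l) ^ m) by (apply pow_le; left; apply Rinv_0_lt_compat; lra).
  assert (U1 : (rho - 2 * d) ^ m <= falling K m * (/ l) ^ m).
  { apply Rle_trans with ((INR (K - m) * / l) ^ m).
    - apply pow_incr. rewrite minus_INR by apply m_le_K. split; [lra|].
      apply (Rmult_le_reg_r l); [lra|]. rewrite Rmult_assoc, Rinv_l, Rmult_1_r by lra.
      replace (INR K) with (INR K / l * l) by (field; lra). nra.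
    - rewrite Rpow_mult_distr. now apply Rmult_le_compat_r. }
  assert (U2 : falling K m * (/ l) ^ m <= (rho + d) ^ m).
  { apply Rle_trans with (INR K ^ m * (/ l) ^ m); [now apply Rmult_le_compat_r|].
    rewrite <- Rpow_mult_distr. apply pow_incr. fold (INR K / l).
    split; [apply Rmult_le_pos; [apply pos_INR|left; apply Rinv_0_lt_compat; lra]|lra]. }
  pose proof (Rabs_pow_diff_le 2 (rho + d) rho m ltac:(lra) ltac:(lra) ltac:(lra)) as P1.
  pose proof (Rabs_pow_diff_le 2 rho (rho - 2 * d) m ltac:(lra) ltac:(lra) ltac:(lra)) as P2.
  replace (rho + d - rho) with d in P1 by ring. replace (rho - (rho - 2 * d)) with (2 * d) in P2 by ring.
  rewrite (Rabs_right d) in P1 by lra. rewrite (Rabs_right (2 * d)) in P2 by lra.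
  apply Rabs_le_inv in P1, P2. pose proof (pow_le 2 m ltac:(lra)).
  assert (0 <= INR m * 2 ^ m * d) by (apply Rmult_le_pos; [apply Rmult_le_pos|]; lra).
  apply Rabs_le. lra.
Qed.

Lemma one_minus_inv_pow_bounds :
  exp (- (INR (K - m) / (INR L - 1))) <= (1 - / INR L) ^ (K - m) <= exp (- (INR (K - m) / INR L)).
Proof.
  pose proof INR_L_ge2 as Hl. set (l := INR L) in *.
  destruct (one_minus_inv_exp_bounds l Hl) as [B1 B2]. split.
  - replace (- (INR (K - m) / (l - 1))) with (INR (K - m) * - / (l - 1)) by (unfold Rdiv; ring).
    rewrite <- exp_pow. apply pow_incr. split; [left; apply exp_pos|auto].
  - replace (- (INR (K - m) / l)) with (INR (K - m) * - / l) by (unfold Rdiv; ring).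
    rewrite <- exp_pow. apply pow_incr. split; [|auto].
    assert (/ l <= / 2) by (apply Rinv_le_contravar; lra). lra.
Qed.

Lemma one_minus_inv_pow_approx :
  0 <= (1 - / INR L) ^ (K - m) <= 1 /\
  Rabs ((1 - / INR L) ^ (K - m) - exp (- rho)) <= 2 * d + 2 / (INR L - 1).
Proof.
  pose proof INR_L_ge2 as Hl. pose proof K_over_L_near as Hx. pose proof one_minus_inv_pow_bounds as [Q1 Q2].
  set (l := INR L) in *.
  set (n := INR (K - m)) in *.
  assert (Hn : n = INR K / l * l - INR m) by (unfold n; rewrite minus_INR by apply m_le_K; field; lra).
  assert (Hnl : 0 <= n / l) by (apply Rmult_le_pos; [apply pos_INR|left; apply Rinv_0_lt_compat; lra]).
  assert (Hnl1 : 0 <= n / (l - 1)) by (apply Rmult_le_pos; [apply pos_INR|left; apply Rinv_0_lt_compat; lra]).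
  assert (Hml : 0 <= INR m / l <= d).
  { split; [apply Rmult_le_pos; [apply pos_INR|left; apply Rinv_0_lt_compat; lra]|].
    apply (Rmult_le_reg_r l); [lra|]. unfold Rdiv. rewrite Rmult_assoc, Rinv_l, Rmult_1_r by lra. lra. }
  assert (Hn1 : Rabs (n / l - rho) <= 2 * d).
  { replace (n / l - rho) with ((INR K / l - rho) - INR m / l) by (rewrite Hn; field; lra).
    apply Rabs_le. lra. }
  assert (Hn2 : Rabs (n / (l - 1) - rho) <= 2 * d + 2 / (l - 1)).
  { replace (n / (l - 1) - rho) with ((n / l - rho) + (n / l) / (l - 1)) by (field; lra).
    assert (0 <= n / l / (l - 1) <= 2 / (l - 1)).
    { split; [apply Rmult_le_pos; [lra|left; apply Rinv_0_lt_compat; lra]|].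
      unfold Rdiv. apply Rmult_le_compat_r; [left; apply Rinv_0_lt_compat; lra|].
      apply Rabs_le_inv in Hn1. lra. }
    eapply Rle_trans; [apply Rabs_triang|]. rewrite (Rabs_right (n / l / (l - 1))) by lra. lra. }
  split.
  - split; [eapply Rle_trans; [left; apply exp_pos|apply Q1]|].
    eapply Rle_trans; [apply Q2|]. rewrite <- exp_0. apply exp_le_compat. lra.
  - pose proof (Rabs_exp_diff_le (- (n / l)) (- rho) ltac:(lra) ltac:(lra)) as E1.
    pose proof (Rabs_exp_diff_le (- (n / (l - 1))) (- rho) ltac:(lra) ltac:(lra)) as E2.
    replace (- (n / l) - - rho) with (- (n / l - rho)) in E1 by ring.
    replace (- (n / (l - 1)) - - rho) with (- (n / (l - 1) - rho)) in E2 by ring.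
    rewrite Rabs_Ropp in E1, E2. apply Rabs_le_inv in E1, E2.
    assert (0 <= 2 / (l - 1)) by (apply Rmult_le_pos; [lra|left; apply Rinv_0_lt_compat; lra]).
    apply Rabs_le. lra.
Qed.

Lemma binom_pmf_poisson_approx :
  Rabs (binom_pmf K L m - poisson rho m) <= poisson_error_const m * d + 2 / (INR L - 1).
Proof.
  unfold poisson_error_const.
  pose proof INR_L_ge2 as Hl. pose proof m_le_K as HmK.
  pose proof falling_pow_approx as U. pose proof one_minus_inv_pow_approx as [Hq Q].
  set (l := INR L) in *.
  set (u := falling K m * (/ l) ^ m) in *. set (q := (1 - / l) ^ (K - m)) in *.
  rewrite binom_pmf_le, C_falling by auto. fold l q. unfold poisson.
  assert (Fm : 1 <= INR (fact m)) by (apply (le_INR 1); pose proof (lt_O_fact m); lia).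
  assert (Hrm : 0 <= rho ^ m <= 1) by (split; [apply pow_le; lra|rewrite <- (pow1 m); apply pow_incr; lra]).
  replace (falling K m / INR (fact m) * (/ l) ^ m * q - exp (- rho) * rho ^ m / INR (fact m))
    with (((u - rho ^ m) * q + rho ^ m * (q - exp (- rho))) / INR (fact m)) by (unfold u; field; lra).
  set (D := (u - rho ^ m) * q + rho ^ m * (q - exp (- rho))).
  assert (HD : Rabs D <= 2 * INR m * 2 ^ m * d + (2 * d + 2 / (l - 1))).
  { unfold D. eapply Rle_trans; [apply Rabs_triang|]. rewrite !Rabs_mult, (Rabs_right q), (Rabs_right (rho ^ m)) by lra.
    pose proof (Rabs_pos (u - rho ^ m)). pose proof (Rabs_pos (q - exp (- rho))).
    assert (Rabs (u - rho ^ m) * q <= 2 * INR m * 2 ^ m * d * 1) by (apply Rmult_le_compat; lra).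
    assert (rho ^ m * Rabs (q - exp (- rho)) <= 1 * (2 * d + 2 / (l - 1))) by (apply Rmult_le_compat; lra).
    lra. }
  unfold Rdiv. rewrite Rabs_mult, (Rabs_right (/ INR (fact m))) by (left; apply Rinv_0_lt_compat; lra).
  assert (0 < / INR (fact m) <= 1) by (split; [apply Rinv_0_lt_compat; lra|rewrite <- Rinv_1; apply Rinv_le_contravar; lra]).
  pose proof (Rabs_pos D).
  assert (Rabs D * / INR (fact m) <= Rabs D * 1) by (apply Rmult_le_compat_l; lra).
  fold l. lra.
Qed.

End BinomialPoisson.

(** Away from [|K/L - rho| < d] the trivial bound [1] is absorbed by the Chebyshev-type term. *)
Lemma binom_pmf_poisson_approx_sq K L m rho d :
  (2 <= L)%nat -> 0 < rho < 1 -> 0 < d <= rho / 4 -> INR m <= d * INR L ->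
  Rabs (binom_pmf K L m - poisson rho m)
  <= poisson_error_const m * d + 2 / (INR L - 1) + (INR K / INR L - rho) ^ 2 / d ^ 2.
Proof.
  intros HL Hr Hd Hm. pose proof (poisson_error_const_pos m).
  assert (Hl : 2 <= INR L) by (apply (le_INR 2), HL).
  assert (0 <= 2 / (INR L - 1)) by (apply Rmult_le_pos; [lra|left; apply Rinv_0_lt_compat; lra]).
  assert (0 < d ^ 2) by (apply pow_lt; lra).
  assert (0 <= (INR K / INR L - rho) ^ 2 / d ^ 2)
    by (apply Rmult_le_pos; [apply pow2_ge_0|left; apply Rinv_0_lt_compat; lra]).
  destruct (Rlt_dec (Rabs (INR K / INR L - rho)) d) as [Hlt|Hge].
  - pose proof (binom_pmf_poisson_approx K L m rho d HL Hr Hd Hm Hlt). nra.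
  - assert (1 <= (INR K / INR L - rho) ^ 2 / d ^ 2).
    { apply Rnot_lt_le in Hge. rewrite <- (Rdiv_diag (d ^ 2)) by lra.
      apply Rmult_le_compat_r; [left; apply Rinv_0_lt_compat; lra|].
      rewrite <- (pow2_abs (INR K / INR L - rho)). apply pow_incr. lra. }
    pose proof (binom_pmf_nonneg K L m ltac:(lia)). pose proof (binom_pmf_le1 K L m ltac:(lia)).
    pose proof (poisson_bounded01 rho m Hr).
    assert (Rabs (binom_pmf K L m - poisson rho m) <= 1) by (apply Rabs_le; lra).
    assert (0 <= poisson_error_const m * d) by nra. lra.
Qed.

(** * The chaotic limit *)

Section ChaoticLimit.
Variables (r : R) (p q : nat) (nu : nat -> list nat -> R) (mu : nat -> R).
Hypothesis hr : 0 < r.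
Hypothesis hq : (0 < q)%nat.
Hypothesis hpq : r = INR p / INR q.
Hypothesis hnu : forall L N : nat, (1 <= L)%nat -> INR N = r * INR L -> rbb_stationary L N (nu L).
Hypothesis hmu : prob_measure_nat mu.
Hypothesis hchaos : forall k : list nat, forall eps : R, 0 < eps ->
  exists L0 : nat, forall L N : nat, (L0 <= L)%nat -> (1 <= L)%nat -> INR N = r * INR L ->
    Rabs (marginal L N (nu L) k - prod_measure mu k) < eps.

Definition admissible (L N : nat) : Prop := (2 <= L)%nat /\ INR N = r * INR L.

Definition eventually (P : nat -> nat -> Prop) : Prop :=
  exists L0, forall L N, (L0 <= L)%nat -> admissible L N -> P L N.

Lemma eventually_and (P Q : nat -> nat -> Prop) :
  eventually P -> eventually Q -> eventually (fun L N => P L N /\ Q L N).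
Proof.
  intros [L1 H1] [L2 H2]. exists (Nat.max L1 L2). intros L N HL HV. split; [apply H1|apply H2]; auto; lia.
Qed.

Lemma eventually_forall_le n (P : nat -> nat -> nat -> Prop) :
  (forall i, eventually (P i)) -> eventually (fun L N => forall i, (i <= n)%nat -> P i L N).
Proof.
  intros H. induction n.
  - destruct (H 0%nat) as [L0 H0]. exists L0. intros L N HL HV i Hi. replace i with 0%nat by lia. auto.
  - destruct (eventually_and _ _ IHn (H (S n))) as [L0 H0]. exists L0. intros L N HL HV i Hi.
    destruct (H0 L N HL HV) as [Hle HSn]. destruct (Nat.eq_dec i (S n)) as [->|]; auto. apply Hle. lia.
Qed.

(** The rationality of [r] provides admissible sizes [L = q (L0 + 2)] beyond every [L0]. *)
Lemma eventually_witness P : eventually P -> exists L N, admissible L N /\ P L N.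
Proof.
  intros [L0 H]. exists (q * (L0 + 2))%nat, (p * (L0 + 2))%nat.
  assert (HV : admissible (q * (L0 + 2)) (p * (L0 + 2))).
  { split; [nia|]. rewrite !mult_INR, hpq. assert (0 < INR q) by (apply lt_0_INR; auto). field. lra. }
  split; auto. apply H; auto. nia.
Qed.

Lemma eventually_large c : eventually (fun L _ => c < INR L).
Proof.
  destruct (archimed c) as [Hup _]. exists (Z.to_nat (up c)). intros L N HL _. apply le_INR in HL.
  destruct (Z_lt_le_dec (up c) 0).
  - pose proof (pos_INR L). assert (IZR (up c) < 0) by (apply IZR_lt; auto). lra.
  - rewrite INR_IZR_INZ, Z2Nat.id in HL by auto. lra.
Qed.

Lemma eventually_inv_small e : 0 < e -> eventually (fun L _ => / INR L < e).
Proof.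
  intros He. destruct (eventually_large (/ e)) as [L0 H]. exists L0. intros L N HL HV.
  specialize (H L N HL HV). pose proof (Rinv_0_lt_compat e He).
  rewrite <- (Rinv_inv e). apply Rinv_lt_contravar; auto. nra.
Qed.

Lemma eq0_of_eventually_small a : (forall e, 0 < e -> eventually (fun _ _ => Rabs a < e)) -> a = 0.
Proof.
  intros H. destruct (Req_dec a 0) as [|Ha]; auto.
  destruct (eventually_witness _ (H (Rabs a) (Rabs_pos_lt a Ha))) as [L [N [_ Hlt]]]. lra.
Qed.

Lemma admissible_stationary L N : admissible L N -> rbb_stationary L N (nu L).
Proof. intros [H1 H2]. apply hnu; auto; lia. Qed.

Lemma admissible_ratio L N : admissible L N -> INR N / INR L = r.
Proof. intros [H1 H2]. rewrite H2. assert (0 < INR L) by (apply lt_0_INR; lia). field. lra. Qed.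

Lemma eventually_marginal_single a e : 0 < e ->
  eventually (fun L N => Rabs (marginal L N (nu L) [a] - mu a) < e).
Proof.
  intros He. destruct (hchaos [a] e He) as [L0 H]. exists L0. intros L N HL [H1 H2].
  specialize (H L N HL ltac:(lia) H2). unfold prod_measure, Rprod_list in H. simpl in H.
  now rewrite Rmult_1_r in H.
Qed.

Lemma eventually_marginal_pair e : 0 < e ->
  eventually (fun L N => Rabs (marginal L N (nu L) [0%nat; 0%nat] - mu 0%nat * mu 0%nat) < e).
Proof.
  intros He. destruct (hchaos [0%nat; 0%nat] e He) as [L0 H]. exists L0. intros L N HL [H1 H2].
  specialize (H L N HL ltac:(lia) H2). unfold prod_measure, Rprod_list in H. simpl in H.
  now rewrite Rmult_1_r in H.
Qed.

Lemma marginal_bounded01 L N k : admissible L N -> 0 <= marginal L N (nu L) k <= 1.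
Proof.
  intros HV. rewrite marginal_expect. apply expect_bounded01; [now apply admissible_stationary|].
  intros x _. destruct (list_eq_dec _ _ _); lra.
Qed.

Lemma mu0_bounded01 : 0 <= mu 0%nat <= 1.
Proof.
  split; [apply hmu|]. apply Rnot_lt_le. intros Hlt.
  destruct (eventually_witness _ (eventually_marginal_single 0 (mu 0%nat - 1) ltac:(lra)))
    as [L [N [HV Hc]]].
  pose proof (marginal_bounded01 L N [0%nat] HV). apply Rabs_def2 in Hc. lra.
Qed.

Definition rho0 : R := 1 - mu 0%nat.

Lemma rho0_quadratic_defect L N : admissible L N ->
  Rabs (- 2 * r + 2 * rho0 + 2 * r * rho0 - rho0 ^ 2)
  <= 2 * r * Rabs (marginal L N (nu L) [0%nat] - mu 0%nat)
     + Rabs (marginal L N (nu L) [0%nat; 0%nat] - mu 0%nat * mu 0%nat) + / INR L.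
Proof.
  intros HV. pose proof (admissible_stationary L N HV) as Hs. pose proof (admissible_ratio L N HV) as Hr.
  pose proof (marginal_bounded01 L N [0%nat; 0%nat] HV) as M00. destruct HV as [HL _].
  pose proof (stationary_second_moment_identity L N (nu L) HL Hs) as I.
  rewrite Hr, occ1_marginal, occ2_marginal in I by auto.
  set (m0 := marginal L N (nu L) [0%nat]) in *. set (m00 := marginal L N (nu L) [0%nat; 0%nat]) in *.
  assert (Hl : 2 <= INR L) by (apply (le_INR 2), HL). set (l := INR L) in *.
  match type of I with ?A = 0 =>
    replace (- 2 * r + 2 * rho0 + 2 * r * rho0 - rho0 ^ 2)
      with (- 2 * r + 2 * rho0 + 2 * r * rho0 - rho0 ^ 2 - A) by (rewrite I; ring) end.
  replace (- 2 * r + 2 * rho0 + 2 * r * rho0 - rho0 ^ 2 - _)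
    with (2 * r * (m0 - mu 0%nat) + (m00 - mu 0%nat * mu 0%nat) + (1 - m00) * / l)
    by (unfold rho0; field; lra).
  assert (0 <= (1 - m00) * / l <= / l).
  { assert (0 < / l) by (apply Rinv_0_lt_compat; lra). split; [apply Rmult_le_pos|]; nra. }
  eapply Rle_trans; [apply Rabs_triang|]. rewrite (Rabs_right ((1 - m00) * / l)) by lra.
  eapply Rle_trans; [apply Rplus_le_compat_r, Rabs_triang|].
  rewrite Rabs_mult, (Rabs_right (2 * r)) by lra. lra.
Qed.

Lemma rho0_quadratic : - 2 * r + 2 * rho0 + 2 * r * rho0 - rho0 ^ 2 = 0.
Proof.
  apply eq0_of_eventually_small. intros e He.
  assert (He1 : 0 < e / (3 * (2 * r + 1))) by (apply Rdiv_lt_0_compat; lra).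
  destruct (eventually_and _ _ (eventually_and _ _ (eventually_marginal_single 0 _ He1)
                                                (eventually_marginal_pair (e / 3) ltac:(lra)))
                          (eventually_inv_small (e / 3) ltac:(lra))) as [L0 H].
  exists L0. intros L N HL HV. destruct (H L N HL HV) as [[H1 H2] H3].
  pose proof (rho0_quadratic_defect L N HV) as D.
  assert (2 * r * Rabs (marginal L N (nu L) [0%nat] - mu 0%nat) <= e / 3).
  { assert (2 * r * (e / (3 * (2 * r + 1))) <= e / 3).
    { apply (Rmult_le_reg_r (3 * (2 * r + 1))); [lra|]. field_simplify; nra. }
    pose proof (Rabs_pos (marginal L N (nu L) [0%nat] - mu 0%nat)). nra. }
  lra.
Qed.

Lemma rho0_eq : rho0 = rho_of r /\ 0 < rho0 < 1.
Proof.
  pose proof rho0_quadratic as Q. pose proof mu0_bounded01 as M.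
  assert (Hx : 0 <= rho0 <= 1) by (unfold rho0; lra). set (x := rho0) in *. clearbody x.
  assert (Hs : sqrt (1 + r ^ 2) = 1 + r - x).
  { rewrite <- (sqrt_pow2 (1 + r - x)) by lra. f_equal. nra. }
  split; [unfold rho_of; rewrite Hs; ring|].
  split; [destruct (Rle_lt_or_eq_dec 0 x (proj1 Hx)) as [|E]; auto; rewrite <- E in Q; nra|].
  destruct (Rle_lt_or_eq_dec x 1 (proj2 Hx)) as [|E]; auto. rewrite E in Q. nra.
Qed.

Lemma occupied_fraction_concentration L N : admissible L N ->
  expect L N (nu L) (fun x => (occupied_count x / INR L - rho0) ^ 2)
  <= / INR L + 2 * Rabs (marginal L N (nu L) [0%nat] - mu 0%nat)
     + Rabs (marginal L N (nu L) [0%nat; 0%nat] - mu 0%nat * mu 0%nat).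
Proof.
  intros HV. pose proof (admissible_stationary L N HV) as Hs.
  pose proof (marginal_bounded01 L N [0%nat] HV) as M0. pose proof (marginal_bounded01 L N [0%nat; 0%nat] HV) as M00.
  destruct HV as [HL _].
  rewrite expect_occupied_fraction_sq, occ1_marginal, occ2_marginal by auto.
  set (m0 := marginal L N (nu L) [0%nat]) in *. set (m00 := marginal L N (nu L) [0%nat; 0%nat]) in *.
  assert (Hl : 2 <= INR L) by (apply (le_INR 2), HL). set (l := INR L) in *.
  pose proof mu0_bounded01. unfold rho0.
  replace ((1 - m0 + (l - 1) * (1 - 2 * m0 + m00)) / l - 2 * (1 - mu 0%nat) * (1 - m0) + (1 - mu 0%nat) ^ 2)
    with ((m0 - m00) * / l + (m00 - mu 0%nat * mu 0%nat) - 2 * mu 0%nat * (m0 - mu 0%nat)) by (field; lra).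
  assert ((m0 - m00) * / l <= / l).
  { assert (0 < / l) by (apply Rinv_0_lt_compat; lra). nra. }
  pose proof (Rle_abs (m00 - mu 0%nat * mu 0%nat)). pose proof (Rle_abs (- (m0 - mu 0%nat))).
  rewrite Rabs_Ropp in *. pose proof (Rabs_pos (m0 - mu 0%nat)). nra.
Qed.

Lemma eventually_concentration e : 0 < e ->
  eventually (fun L N => expect L N (nu L) (fun x => (occupied_count x / INR L - rho0) ^ 2) < e).
Proof.
  intros He.
  destruct (eventually_and _ _ (eventually_and _ _ (eventually_marginal_single 0 (e / 6) ltac:(lra))
                                                (eventually_marginal_pair (e / 3) ltac:(lra)))
                          (eventually_inv_small (e / 3) ltac:(lra))) as [L0 H].
  exists L0. intros L N HL HV. destruct (H L N HL HV) as [[H1 H2] H3].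
  pose proof (occupied_fraction_concentration L N HV). lra.
Qed.

Lemma expect_binom_poisson_approx L N i m d : admissible L N -> 0 < d <= rho0 / 4 -> INR m <= d * INR L ->
  Rabs (expect L N (nu L) (fun x => kron (first_bin x) i * binom_pmf (Kocc x) L m)
        - marginal L N (nu L) [i] * poisson rho0 m)
  <= poisson_error_const m * d + 2 / (INR L - 1)
     + expect L N (nu L) (fun x => (occupied_count x / INR L - rho0) ^ 2) / d ^ 2.
Proof.
  intros HV Hd Hm. pose proof (admissible_stationary L N HV) as Hs. destruct HV as [HL _].
  destruct rho0_eq as [_ Hr].
  rewrite marginal_single by lia.
  replace (expect L N (nu L) (fun x => kron (first_bin x) i * binom_pmf (Kocc x) L m)
           - expect L N (nu L) (fun x => kron (first_bin x) i) * poisson rho0 m)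
    with (expect L N (nu L) (fun x => kron (first_bin x) i * (binom_pmf (Kocc x) L m - poisson rho0 m)))
    by (rewrite Rmult_comm, <- expect_scal, <- expect_minus; apply expect_ext; intros; ring).
  set (c := poisson_error_const m * d + 2 / (INR L - 1)).
  eapply Rle_trans.
  - apply (expect_abs_le _ _ _ _ (fun x => c + / d ^ 2 * (occupied_count x / INR L - rho0) ^ 2)); auto.
    intros x _. rewrite Rabs_mult, (Rabs_right (kron _ _)) by (apply Rle_ge, kron_bounded01).
    pose proof (binom_pmf_poisson_approx_sq (Kocc x) L m rho0 d HL Hr Hd Hm) as B.
    pose proof (kron_bounded01 (first_bin x) i). pose proof (Rabs_pos (binom_pmf (Kocc x) L m - poisson rho0 m)).
    unfold occupied_count, c.
    replace ((INR (Kocc x) / INR L - rho0) ^ 2 / d ^ 2) with (/ d ^ 2 * (INR (Kocc x) / INR L - rho0) ^ 2) in B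
      by (unfold Rdiv; ring).
    nra.
  - rewrite expect_plus, expect_const, expect_scal by auto. right. unfold c, Rdiv. ring.
Qed.

Lemma eventually_balance_small M e : 0 < e ->
  eventually (fun L N => forall i m, (m <= M)%nat ->
    Rabs (expect L N (nu L) (fun x => kron (first_bin x) i * binom_pmf (Kocc x) L m)
          - marginal L N (nu L) [i] * poisson rho0 m) < e).
Proof.
  intros He. destruct rho0_eq as [_ Hr]. pose proof (poisson_error_const_pos M) as HC.
  set (d := Rmin (rho0 / 4) (e / (3 * poisson_error_const M))).
  assert (Hd : 0 < d <= rho0 / 4) by (split; [apply Rmin_pos; [lra|apply Rdiv_lt_0_compat; lra]|apply Rmin_l]).
  assert (HdC : poisson_error_const M * d <= e / 3).
  { pose proof (Rmin_r (rho0 / 4) (e / (3 * poisson_error_const M))). fold d in H.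
    apply (Rmult_le_compat_l (poisson_error_const M)) in H; [|lra].
    replace (poisson_error_const M * (e / (3 * poisson_error_const M))) with (e / 3) in H by (field; lra). lra. }
  assert (Hd2 : 0 < d ^ 2) by (apply pow_lt; lra).
  destruct (eventually_and _ _ (eventually_and _ _ (eventually_concentration (e * d ^ 2 / 3) ltac:(nra))
                                                (eventually_large (6 / e + 1)))
                          (eventually_large (INR M / d))) as [L0 H].
  exists L0. intros L N HL HV i m Hm. destruct (H L N HL HV) as [[H1 H2] H3].
  assert (HmL : INR m <= d * INR L).
  { apply Rle_trans with (INR M); [now apply le_INR|].
    apply (Rmult_lt_compat_l d) in H3; [|lra]. replace (d * (INR M / d)) with (INR M) in H3 by (field; lra). lra. }
  eapply Rle_lt_trans; [now apply expect_binom_poisson_approx|].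
  assert (poisson_error_const m * d <= e / 3).
  { pose proof (poisson_error_const_mono m M Hm). nra. }
  assert (2 / (INR L - 1) < e / 3).
  { assert (0 < 6 / e) by (apply Rdiv_lt_0_compat; lra).
    replace (e / 3) with (2 / (6 / e)) by (field; lra). apply Rmult_lt_compat_l; [lra|].
    apply Rinv_lt_contravar; [apply Rmult_lt_0_compat|]; lra. }
  assert (expect L N (nu L) (fun x => (occupied_count x / INR L - rho0) ^ 2) / d ^ 2 < e / 3).
  { apply (Rmult_lt_reg_r (d ^ 2)); [lra|]. unfold Rdiv. rewrite Rmult_assoc, Rinv_l, Rmult_1_r by lra. lra. }
  lra.
Qed.

Lemma md1_balance j : mu j = sum_f_R0 (fun i => mu i * poisson rho0 (j + ind_pos i - i)) (S j).
Proof.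
  apply Rminus_diag_uniq, eq0_of_eventually_small. intros e He.
  remember (INR (length (seq 0 (S (S j))))) as J eqn:HJlen.
  assert (HJ : 2 <= J) by (rewrite HJlen, length_seq; apply (le_INR 2); lia).
  assert (HeJ : 0 < e / (3 * J)) by (apply Rdiv_lt_0_compat; lra).
  destruct (eventually_and _ _
     (eventually_forall_le (S j) _ (fun i => eventually_marginal_single i _ HeJ))
     (eventually_balance_small (S j) _ HeJ)) as [L0 H].
  exists L0. intros L N HL HV. destruct (H L N HL HV) as [Hm Hb].
  pose proof (admissible_stationary L N HV) as Hs. destruct rho0_eq as [_ Hr].
  set (Ei i := expect L N (nu L) (fun x => kron (first_bin x) i * binom_pmf (Kocc x) L (j + ind_pos i - i))).
  set (mi i := marginal L N (nu L) [i]). set (pi i := poisson rho0 (j + ind_pos i - i)).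
  rewrite <- sumR_seq_sum_f_R0. change (Rabs (mu j - sumR (fun i => mu i * pi i) (seq 0 (S (S j)))) < e).
  replace (mu j - sumR (fun i => mu i * pi i) (seq 0 (S (S j))))
    with ((mu j - mi j) + sumR (fun i => Ei i - mi i * pi i) (seq 0 (S (S j)))
          + sumR (fun i => (mi i - mu i) * pi i) (seq 0 (S (S j)))).
  2:{ unfold mi at 1. rewrite (marginal_first_bin_balance L N (nu L) (proj1 HV) Hs j).
      fold Ei. rewrite !sumR_minus, (sumR_ext (fun i => (mi i - mu i) * pi i) (fun i => mi i * pi i - mu i * pi i))
        by (intros; ring). rewrite sumR_minus. ring. }
  assert (T1 : Rabs (mu j - mi j) < e / (3 * J)) by (rewrite Rabs_minus_sym; apply Hm; lia).
  assert (T2 : Rabs (sumR (fun i => Ei i - mi i * pi i) (seq 0 (S (S j)))) <= J * (e / (3 * J))).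
  { eapply Rle_trans; [apply sumR_abs|]. rewrite HJlen at 1. rewrite <- sumR_const. apply sumR_le. intros i _. left. apply Hb.
    pose proof (ind_pos_le1 i). lia. }
  assert (T3 : Rabs (sumR (fun i => (mi i - mu i) * pi i) (seq 0 (S (S j)))) <= J * (e / (3 * J))).
  { eapply Rle_trans; [apply sumR_abs|]. rewrite HJlen at 1. rewrite <- sumR_const. apply sumR_le. intros i Hi. apply in_seq in Hi.
    pose proof (poisson_bounded01 rho0 (j + ind_pos i - i) Hr) as P. fold (pi i) in P.
    rewrite Rabs_mult, (Rabs_right (pi i)) by lra.
    assert (Rabs (mi i - mu i) < e / (3 * J)) by (apply Hm; lia).
    pose proof (Rabs_pos (mi i - mu i)). nra. }
  replace (J * (e / (3 * J))) with (e / 3) in T2, T3 by (field; lra).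
  pose proof (Rabs_triang (mu j - mi j + sumR (fun i => Ei i - mi i * pi i) (seq 0 (S (S j))))
                          (sumR (fun i => (mi i - mu i) * pi i) (seq 0 (S (S j))))).
  pose proof (Rabs_triang (mu j - mi j) (sumR (fun i => Ei i - mi i * pi i) (seq 0 (S (S j))))).
  assert (e / (3 * J) <= e / 3) by (apply Rmult_le_compat_l; [lra|apply Rinv_le_contravar; lra]).
  lra.
Qed.

End ChaoticLimit.

Theorem mainTheorem7
  (r : R) (hr : 0 < r)
  (hrat : exists p q : nat, (0 < q)%nat /\ r = INR p / INR q)
  (nu : nat -> list nat -> R)
  (hnu : forall L N : nat, (1 <= L)%nat -> INR N = r * INR L ->
           rbb_stationary L N (nu L))
  (mu : nat -> R) (hmu : prob_measure_nat mu)
  (hchaos : forall k : list nat, forall eps : R, 0 < eps ->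
     exists L0 : nat, forall L N : nat, (L0 <= L)%nat -> (1 <= L)%nat ->
       INR N = r * INR L ->
       Rabs (marginal L N (nu L) k - prod_measure mu k) < eps) :
  md1_invariant (rho_of r) mu.
Proof.
  destruct hrat as [p [q [hq hpq]]].
  destruct (rho0_eq r p q nu mu hr hq hpq hnu hmu hchaos) as [E _].
  split; [exact hmu|]. intros j. rewrite <- E.
  exact (md1_balance r p q nu mu hr hq hpq hnu hmu hchaos j).
Qed.
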